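(* Let $\alpha,\beta\in[0,r]\cap A$ with $\alpha<\beta$, $I=(\alpha,\beta)$, and $x\in\mathbf F_I$ with $\mathrm{fix}(x)\cap I\cap A=\varnothing$. Then the centralizer of $x$ in $\mathbf F_I$ is cyclic.
   Context: Maps act on the right. Fix real $r>0$, a subgroup $\Lambda\neq\{1\}$ of $\mathbb R^*_+$, and an additive subgroup $A\subseteq\mathbb R$ with $r\in A$ and $\lambda A\subseteq A$ for $\lambda\in\Lambda$. $\mathbf F=\mathbf F(r,\Lambda,A)$ is the group of homeomorphisms $x\colon[0,r)\to[0,r)$ that are piecewise affine with finitely many breakpoints, all slopes in $\Lambda$, and all breakpoints and their images in $A$. For a permutation $x$, $\mathrm{fix}(x)$ is its fixed point set and $\mathrm{supp}(x)$ its complement. For $S\subseteq[0,r)$, $\mathbf F_S=\{x\in\mathbf F\mid\mathrm{supp}(x)\subseteq S\}$. *)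

From Stdlib Require Import Reals Lra List ZArith.
Open Scope R_scope.

Definition inDom (r t : R) : Prop := 0 <= t < r.

Definition cont_on_dom (r : R) (f : R -> R) : Prop :=
  forall t, inDom r t -> limit1_in f (inDom r) (f t) t.

Definition homeo_dom (r : R) (f : R -> R) : Prop :=
  (forall t, inDom r t -> inDom r (f t)) /\
  cont_on_dom r f /\
  exists g : R -> R,
    (forall t, inDom r t -> inDom r (g t)) /\
    cont_on_dom r g /\
    (forall t, inDom r t -> g (f t) = t) /\
    (forall t, inDom r t -> f (g t) = t).

Definition PL_data (r : R) (Lam A : R -> Prop) (f : R -> R) : Prop :=
  exists l : list R,
    (2 <= length l)%nat /\
    nth 0 l 0 = 0 /\ last l 0 = r /\
    Forall A l /\
    (forall i, (S i < length l)%nat -> nth i l 0 < nth (S i) l 0) /\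
    (forall i, (S i < length l)%nat ->
        A (f (nth i l 0)) /\
        exists lam c, Lam lam /\
          forall t, nth i l 0 <= t < nth (S i) l 0 -> f t = lam * t + c).

(* Elements of F(r,Lam,A), represented as maps R -> R that are the identity
   outside [0,r) (so that equality of elements is Leibniz equality). *)
Definition inF (r : R) (Lam A : R -> Prop) (f : R -> R) : Prop :=
  homeo_dom r f /\ PL_data r Lam A f /\
  (forall t, ~ inDom r t -> f t = t).

Definition inF_S (r : R) (Lam A S : R -> Prop) (f : R -> R) : Prop :=
  inF r Lam A f /\ (forall t, inDom r t -> f t <> t -> S t).

Definition rcomp (f g : R -> R) : R -> R := fun t => g (f t). (* right action: f then g *)

Fixpoint iterF (n : nat) (g : R -> R) : R -> R :=
  match n with O => fun t => t | S k => rcomp (iterF k g) g end.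

Definition is_Zpow (g : R -> R) (n : Z) (y : R -> R) : Prop :=
  match n with
  | Z0 => y = (fun t => t)
  | Zpos p => y = iterF (Pos.to_nat p) g
  | Zneg p => rcomp y (iterF (Pos.to_nat p) g) = (fun t => t)
  end.

Definition good_Lam (Lam : R -> Prop) : Prop :=
  (forall l, Lam l -> 0 < l) /\ Lam 1 /\
  (forall a b, Lam a -> Lam b -> Lam (a * b)) /\
  (forall a, Lam a -> Lam (/ a)) /\
  (exists a, Lam a /\ a <> 1).

Definition good_A (r : R) (Lam A : R -> Prop) : Prop :=
  A 0 /\ (forall a b, A a -> A b -> A (a + b)) /\ (forall a, A a -> A (- a)) /\
  A r /\ (forall l a, Lam l -> A a -> A (l * a)).

(* For the centraliser C(x) the argument runs as follows.
   1. An element y of C(x) is determined by its germ at alpha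
      ([cent_germ_eq]): agreement of two such maps propagates along I, near a
      point of A by conjugating with x (which moves that point), elsewhere
      because both maps are affine there.  So y |-> (slope of y at alpha) is
      injective on C(x); its image [Slope] is a subgroup of R*_+.
   2. Replacing x by x^-1 we may assume that x has slope lam > 1 at alpha.
      Let bp be the first fixed point of x after alpha; x has slope lam' < 1
      just left of bp.  A point u of (alpha,bp) is essential ([Ess]) when x^n
      has a breakpoint at u for n large.  Maps of C(x) that are affine at u
      preserve essentiality, and every fundamental domain [q, x q) contains an
      essential point, since otherwise x^N would conjugate the slope lam into
      the slope lam'.
   3. Essential points of [q, x q] are breakpoints of one fixed power x^N, so
      a pigeonhole argument on the images of one essential point shows that
      for every nu in Slope some power nu^k, k bounded, lies in lam^Z; hence
      nu^M lies in lam^Z for a fixed M.  Then {w | lam^w = nu^M, nu in Slope}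
      is a subgroup of Z, and an element whose slope realises its generator
      generates C(x) ([centralizer_cyclic]). *)

From Stdlib Require Import Reals Lra Lia List ZArith Classical ClassicalEpsilon FunctionalExtensionality.
Open Scope R_scope.

Lemma cont_induction (P : R -> Prop) (u v : R) :
  u <= v -> P u ->
  (forall t, u <= t < v -> (forall s, u <= s <= t -> P s) ->
     exists e, 0 < e /\ forall s, t <= s < t + e -> P s) ->
  (forall t, u < t <= v -> (forall s, u <= s < t -> P s) -> P t) ->
  forall s, u <= s <= v -> P s.
Proof.
  intros Huv Pu Hr Hl.
  set (E := fun w => u <= w <= v /\ forall s, u <= s <= w -> P s).
  assert (Hb : bound E) by (exists v; intros w [Hw _]; lra).
  assert (He : exists w, E w) by (exists u; split; [lra|intros s Hs; replace s with u by lra; auto]).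
  destruct (completeness E Hb He) as [S [HS1 HS2]].
  assert (HuS : u <= S) by (apply HS1; split; [lra|intros s Hs; replace s with u by lra; auto]).
  assert (HSv : S <= v) by (apply HS2; intros w [Hw _]; lra).
  assert (H1 : forall s, u <= s < S -> P s).
  { intros s Hs. destruct (classic (exists w, E w /\ s < w)) as [[w [[Hw1 Hw2] Hsw]]|Hn].
    - apply Hw2; lra.
    - exfalso. assert (S <= s). { apply HS2. intros w Ew. destruct (Rle_dec w s); auto.
        exfalso; apply Hn; exists w; split; auto; lra. } lra. }
  assert (PS : P S).
  { destruct (Req_dec S u) as [->|Hne]; auto. apply Hl; [lra|auto]. }
  assert (ES : forall s, u <= s <= S -> P s).
  { intros s Hs. destruct (Req_dec s S) as [->|]; auto. apply H1; lra. }
  destruct (Req_dec S v) as [<-|HSv'].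
  - exact ES.
  - exfalso. destruct (Hr S ltac:(lra) ES) as [e [He0 He2]].
    set (w := Rmin (S + e/2) v).
    assert (Ew : E w).
    { split. unfold w; unfold Rmin; destruct Rle_dec; lra.
      intros s Hs. destruct (Rle_dec s S). apply ES; lra. apply He2.
      unfold w in Hs; unfold Rmin in Hs; destruct Rle_dec in Hs; lra. }
    specialize (HS1 w Ew). unfold w in HS1; unfold Rmin in HS1; destruct Rle_dec in HS1; lra.
Qed.

Lemma lines_agree m1 c1 m2 c2 s1 s2 : s1 <> s2 ->
  m1 * s1 + c1 = m2 * s1 + c2 -> m1 * s2 + c1 = m2 * s2 + c2 -> m1 = m2 /\ c1 = c2.
Proof.
  intros Hne H1 H2.
  assert (Hm : (m1 - m2) * (s1 - s2) = 0) by nra.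
  apply Rmult_integral in Hm. destruct Hm as [Hm|Hm]; [|exfalso; apply Hne; lra].
  assert (m1 = m2) by lra. subst. split; lra.
Qed.

Lemma lines_agree_on m1 c1 m2 c2 a b : a < b ->
  (forall s, a < s < b -> m1 * s + c1 = m2 * s + c2) -> m1 = m2 /\ c1 = c2.
Proof.
  intros Hab H. apply (lines_agree _ _ _ _ ((2 * a + b) / 3) ((a + 2 * b) / 3)); [lra|apply H; lra|apply H; lra].
Qed.

Lemma Rabs_lt_iff x a : Rabs x < a <-> - a < x < a.
Proof. unfold Rabs; destruct Rcase_abs; split; intros; lra. Qed.

Lemma div_lt_bound a m e : 0 < m -> 0 <= a -> a < m * e -> 0 <= a / m < e.
Proof.
  intros Hm Ha Hae. split.
  - unfold Rdiv; apply Rmult_le_pos; auto; left; apply Rinv_0_lt_compat; auto.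
  - apply (Rmult_lt_reg_l m); auto. unfold Rdiv. rewrite <- Rmult_assoc, (Rmult_comm m a), Rmult_assoc, Rinv_r; lra.
Qed.
Lemma mul_lt_of_lt_div m a e : 0 < m -> a < e / m -> m * a < e.
Proof.
  intros Hm Ha. apply (Rmult_lt_compat_l m) in Ha; auto.
  replace (m * (e / m)) with e in Ha by (field; lra). exact Ha.
Qed.
Lemma div_abs_lt_bound a m e : 0 < m -> Rabs a < m * e -> Rabs (a / m) < e.
Proof.
  intros Hm Hae. unfold Rdiv. rewrite Rabs_mult, (Rabs_right (/m)) by (left; apply Rinv_0_lt_compat; auto).
  apply (Rmult_lt_reg_l m); auto. rewrite <- Rmult_assoc, (Rmult_comm m), Rmult_assoc, Rinv_r; lra.
Qed.

Lemma pow_big lam : 1 < lam -> forall M, exists j, M < lam ^ j.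
Proof.
  intros Hl M. destruct (Pow_x_infinity lam ltac:(rewrite Rabs_right; lra) (M + 1)) as [N HN].
  exists N. specialize (HN N (le_n _)).
  rewrite Rabs_right in HN by (left; apply pow_lt; lra). lra.
Qed.

Lemma nodup_map_seq {T : Type} : forall n (f : nat -> T),
  (forall i j, (i < j < n)%nat -> f i <> f j) -> NoDup (map f (seq 0 n)).
Proof.
  induction n; intros f Hf.
  - constructor.
  - simpl. constructor.
    + intros Hin. rewrite <- seq_shift, map_map in Hin. apply in_map_iff in Hin.
      destruct Hin as [k [Hk Hin]]. apply in_seq in Hin. apply (Hf 0%nat (S k)); [lia|auto].
    + rewrite <- seq_shift, map_map. apply IHn. intros i j Hij. apply Hf. lia.
Qed.

Lemma pigeonhole {T : Type} (L : list T) (P : nat -> T -> Prop) :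
  (forall k, (k <= length L)%nat -> exists v, In v L /\ P k v) ->
  exists i j v, (i < j <= length L)%nat /\ P i v /\ P j v.
Proof.
  intros H. set (n := length L).
  destruct (H 0%nat (Nat.le_0_l _)) as [v0 _].
  set (f := fun k => epsilon (inhabits v0) (fun v => In v L /\ P k v)).
  assert (Hf : forall k, (k <= n)%nat -> In (f k) L /\ P k (f k)).
  { intros k Hk. unfold f. apply epsilon_spec. apply H; auto. }
  destruct (classic (exists i j, (i < j <= n)%nat /\ f i = f j)) as [[i [j [Hij Heq]]]|Hn].
  - exists i, j, (f i). split; auto. split. apply Hf; lia. rewrite Heq. apply Hf; lia.
  - exfalso. assert (HND : NoDup (map f (seq 0 (S n)))).
    { apply nodup_map_seq. intros i j Hij Heq. apply Hn. exists i, j. split; auto. lia. }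
    assert (Hincl : incl (map f (seq 0 (S n))) L).
    { intros v Hv. apply in_map_iff in Hv. destruct Hv as [k [<- Hk]]. apply in_seq in Hk. apply Hf. lia. }
    pose proof (NoDup_incl_length HND Hincl) as Hlen.
    rewrite length_map, length_seq in Hlen. unfold n in Hlen. lia.
Qed.

Lemma fact_multiple : forall n k, (1 <= k <= n)%nat -> exists t, fact n = (k * t)%nat.
Proof.
  induction n; intros k Hk; [lia|].
  destruct (Nat.eq_dec k (S n)) as [->|Hne].
  - exists (fact n). reflexivity.
  - destruct (IHn k ltac:(lia)) as [t Ht]. exists (S n * t)%nat. simpl fact. rewrite Ht. lia.
Qed.

Lemma Z_floor z : exists w : Z, IZR w <= z < IZR w + 1.
Proof.
  destruct (archimed z) as [H1 H2]. exists (up z - 1)%Z. rewrite minus_IZR. simpl. lra.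
Qed.

Lemma min_nat (P : nat -> Prop) n : P n -> exists m, P m /\ forall k, (k < m)%nat -> ~ P k.
Proof.
  revert n. induction n as [n IH] using (well_founded_induction lt_wf). intros Hn.
  destruct (classic (exists k, (k < n)%nat /\ P k)) as [[k [Hk Pk]]|Hno].
  - apply (IH k Hk Pk).
  - exists n. split; auto. intros k Hk Pk. apply Hno. exists k; auto.
Qed.

Lemma Z_subgroup_cyclic (E : Z -> Prop) n : (0 < n)%nat -> E (Z.of_nat n) ->
  (forall a b, E a -> E b -> E (a - b)%Z) ->
  exists k, (0 < k)%Z /\ E k /\ forall w, E w -> exists a, w = (a * k)%Z.
Proof.
  intros Hn En Esub.
  assert (Emul : forall k, E k -> forall a, E (a * k)%Z).
  { intros k Ek a. assert (E0 : E 0%Z) by (replace 0%Z with (k - k)%Z by lia; auto).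
    induction a using Z.peano_ind.
    - exact E0.
    - replace (Z.succ a * k)%Z with (a * k - (0 - k))%Z by lia. apply Esub; auto.
    - replace (Z.pred a * k)%Z with (a * k - k)%Z by lia. apply Esub; auto. }
  destruct (min_nat (fun n => (0 < n)%nat /\ E (Z.of_nat n)) n (conj Hn En)) as [k [[Hk Ek] Hmin]].
  exists (Z.of_nat k). split; [lia|split; auto]. intros w Ew.
  pose proof (Z.div_mod w (Z.of_nat k) ltac:(lia)) as Hdm.
  pose proof (Z.mod_pos_bound w (Z.of_nat k) ltac:(lia)) as Hb.
  exists (w / Z.of_nat k)%Z.
  assert (Eb : E (w mod Z.of_nat k)%Z).
  { replace (w mod Z.of_nat k)%Z with (w - w / Z.of_nat k * Z.of_nat k)%Z by lia. auto. }
  destruct (Z.eq_dec (w mod Z.of_nat k) 0) as [H0|Hne]; [lia|exfalso].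
  apply (Hmin (Z.to_nat (w mod Z.of_nat k))); [lia|]. split; [lia|]. rewrite Z2Nat.id by lia. auto.
Qed.

Class Setting := {
  sr : R; sLam : R -> Prop; sA : R -> Prop; salpha : R; sbeta : R;
  hr : 0 < sr;
  Lpos : forall l, sLam l -> 0 < l;
  L1 : sLam 1;
  Lmul : forall a b, sLam a -> sLam b -> sLam (a * b);
  Linv : forall a, sLam a -> sLam (/ a);
  Lne : exists a, sLam a /\ a <> 1;
  A0 : sA 0;
  Aadd : forall a b, sA a -> sA b -> sA (a + b);
  Aopp : forall a, sA a -> sA (- a);
  Ar : sA sr;
  Amul : forall l a, sLam l -> sA a -> sA (l * a);
  halpha : 0 <= salpha <= sr;
  hbeta : 0 <= sbeta <= sr;
  hAalpha : sA salpha;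
  hAbeta : sA sbeta;
  hab : salpha < sbeta
}.

Section Elements.
Context {St : Setting}.
Local Notation r := sr.
Local Notation Lam := sLam.
Local Notation A := sA.
Local Notation alpha := salpha.
Local Notation beta := sbeta.
#[local] Hint Resolve L1 Lmul Linv A0 Aadd Aopp Amul Ar hAalpha hAbeta : core.

Definition inI (t : R) := alpha < t < beta.

Lemma Asub a b : A a -> A b -> A (a - b).
Proof. intros. unfold Rminus. auto. Qed.

Definition aff_right (f : R -> R) t := exists e m c, 0 < e /\ Lam m /\
  forall s, t <= s < t + e -> f s = m * s + c.
Definition aff_left (f : R -> R) t := exists e m c, 0 < e /\ Lam m /\
  forall s, t - e < s <= t -> f s = m * s + c.
Definition aff_near (f : R -> R) t := exists e m c, 0 < e /\ Lam m /\
  forall s, t - e < s < t + e -> f s = m * s + c.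

(* Local description of the elements of F_I: f fixes the complement of I,
   has affine germs with slopes in Lam on both sides of every point, is
   affine near points outside A and outside a finite set of breakpoints,
   maps A onto A and is onto.  [Felt] is equivalent to membership in F_I
   (see [inF_Felt] and [Felt_inF]) but is stable under composition and
   inversion with short proofs. *)
Record Felt (f : R -> R) : Prop := {
  felt_out : forall t, ~ inI t -> f t = t;
  felt_right : forall t, aff_right f t;
  felt_left : forall t, aff_left f t;
  felt_offA : forall t, ~ A t -> aff_near f t;
  felt_breaks : exists B : list R, forall t, ~ In t B -> aff_near f t;
  felt_A : forall t, A t <-> A (f t);
  felt_surj : forall v, exists t, f t = v
}.

Lemma continuous_of_aff f t : aff_right f t -> aff_left f t ->
  forall eps, 0 < eps -> exists d, 0 < d /\ forall s, Rabs (s - t) < d -> Rabs (f s - f t) < eps.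
Proof.
  intros [e1 [m1 [c1 [He1 [Hm1 H1]]]]] [e2 [m2 [c2 [He2 [Hm2 H2]]]]] eps Heps.
  pose proof (Lpos _ Hm1). pose proof (Lpos _ Hm2).
  exists (Rmin (Rmin e1 e2) (eps / (m1 + m2))). split.
  { apply Rmin_glb_lt; [apply Rmin_glb_lt|]; auto. apply Rdiv_lt_0_compat; lra. }
  intros s Hs.
  assert (Hd1 := Rmin_l (Rmin e1 e2) (eps / (m1 + m2))).
  assert (Hd2 := Rmin_r (Rmin e1 e2) (eps / (m1 + m2))).
  assert (Hd3 := Rmin_l e1 e2). assert (Hd4 := Rmin_r e1 e2).
  assert (Hb : Rabs (s - t) < eps / (m1 + m2)) by lra.
  assert (Hb2 : Rabs (s - t) * (m1 + m2) < eps).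
  { apply (Rmult_lt_compat_r (m1 + m2)) in Hb; [|lra].
    unfold Rdiv in Hb. rewrite Rmult_assoc, Rinv_l in Hb; lra. }
  assert (Ht1 : f t = m1 * t + c1) by (apply H1; lra).
  assert (Ht2 : f t = m2 * t + c2) by (apply H2; lra).
  assert (0 <= Rabs (s - t)) by apply Rabs_pos.
  destruct (Rle_dec t s).
  - rewrite (H1 s) by (split; [lra| apply Rabs_lt_iff in Hs; lra]).
    rewrite Ht1. replace (m1 * s + c1 - (m1 * t + c1)) with (m1 * (s - t)) by ring.
    rewrite Rabs_mult, (Rabs_right m1) by lra. nra.
  - rewrite (H2 s) by (split; [apply Rabs_lt_iff in Hs; lra|lra]).
    rewrite Ht2. replace (m2 * s + c2 - (m2 * t + c2)) with (m2 * (s - t)) by ring.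
    rewrite Rabs_mult, (Rabs_right m2) by lra. nra.
Qed.
Lemma increasing_of_aff f u v : u < v ->
  (forall t, u <= t < v -> aff_right f t) -> (forall t, u < t <= v -> aff_left f t) -> f u < f v.
Proof.
  intros Huv HR HL.
  assert (H : forall s, u <= s <= v -> s = u \/ f u < f s).
  { apply cont_induction; [lra|left; auto| |].
    - intros t Ht IH. destruct (HR t Ht) as [e [m [c [He [Hm H]]]]].
      pose proof (Lpos _ Hm). exists e; split; auto. intros s Hs.
      destruct (Req_dec s t) as [->|Hne]. apply IH; lra.
      right. assert (f t < f s) by (rewrite (H s), (H t) by lra; nra).
      destruct (IH t ltac:(lra)) as [->|]; lra.
    - intros t Ht IH. right. destruct (HL t Ht) as [e [m [c [He [Hm H]]]]].
      pose proof (Lpos _ Hm).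
      set (s := Rmax u (t - e/2)).
      assert (Hs1 : u <= s) by (unfold s; apply Rmax_l).
      assert (Hs2 : t - e/2 <= s) by (unfold s; apply Rmax_r).
      assert (Hs3 : s < t) by (unfold s; unfold Rmax; destruct Rle_dec; lra).
      assert (f s < f t) by (rewrite (H s), (H t) by lra; nra).
      destruct (IH s ltac:(lra)) as [Heq|]; [|lra]. rewrite <- Heq in *; lra. }
  destruct (H v ltac:(lra)); lra.
Qed.
Lemma Felt_mono f : Felt f -> forall s t, s < t -> f s < f t.
Proof. intros Hf s t Hst. apply increasing_of_aff; auto; intros; [apply felt_right|apply felt_left]; auto. Qed.
Lemma Felt_inj f : Felt f -> forall s t, f s = f t -> s = t.
Proof.
  intros Hf s t H. destruct (Rtotal_order s t) as [H1|[H1|H1]]; auto;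
  apply (Felt_mono f Hf) in H1; lra.
Qed.
Lemma Felt_le f : Felt f -> forall s t, f s <= f t <-> s <= t.
Proof.
  intros Hf s t. split; intro H.
  - destruct (Rle_dec s t); auto. assert (f t < f s) by (apply Felt_mono; auto; lra). lra.
  - destruct (Req_dec s t) as [->|]; [lra|]. left; apply Felt_mono; auto; lra.
Qed.
Lemma Felt_lt f : Felt f -> forall s t, f s < f t <-> s < t.
Proof.
  intros Hf s t. split; intro H.
  - destruct (Rlt_dec s t); auto. assert (f t <= f s) by (apply Felt_le; auto; lra). lra.
  - apply Felt_mono; auto.
Qed.
Lemma Felt_cont f : Felt f -> forall t eps, 0 < eps ->
  exists d, 0 < d /\ forall s, Rabs (s - t) < d -> Rabs (f s - f t) < eps.
Proof. intros Hf t. apply continuous_of_aff; [apply felt_right|apply felt_left]; auto. Qed.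

Lemma aff_right_comp f g t : aff_right f t -> aff_right g (f t) -> aff_right (fun s => g (f s)) t.
Proof.
  intros [e1 [m1 [c1 [He1 [Hm1 H1]]]]] [e2 [m2 [c2 [He2 [Hm2 H2]]]]].
  pose proof (Lpos _ Hm1).
  exists (Rmin e1 (e2 / m1)), (m2 * m1), (m2 * c1 + c2). repeat split; auto.
  - apply Rmin_glb_lt; auto. apply Rdiv_lt_0_compat; lra.
  - intros s Hs. assert (Hb1 := Rmin_l e1 (e2/m1)). assert (Hb2 := Rmin_r e1 (e2/m1)).
    assert (Hb3 : m1 * (s - t) < e2) by (apply mul_lt_of_lt_div; lra).
    rewrite (H1 s) by lra. rewrite H2. ring.
    rewrite (H1 t) by lra. split; nra.
Qed.
Lemma aff_left_comp f g t : aff_left f t -> aff_left g (f t) -> aff_left (fun s => g (f s)) t.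
Proof.
  intros [e1 [m1 [c1 [He1 [Hm1 H1]]]]] [e2 [m2 [c2 [He2 [Hm2 H2]]]]].
  pose proof (Lpos _ Hm1).
  exists (Rmin e1 (e2 / m1)), (m2 * m1), (m2 * c1 + c2). repeat split; auto.
  - apply Rmin_glb_lt; auto. apply Rdiv_lt_0_compat; lra.
  - intros s Hs. assert (Hb1 := Rmin_l e1 (e2/m1)). assert (Hb2 := Rmin_r e1 (e2/m1)).
    assert (Hb3 : m1 * (t - s) < e2) by (apply mul_lt_of_lt_div; lra).
    rewrite (H1 s) by lra. rewrite H2. ring.
    rewrite (H1 t) by lra. split; nra.
Qed.
Lemma aff_near_comp f g t : aff_near f t -> aff_near g (f t) -> aff_near (fun s => g (f s)) t.
Proof.
  intros [e1 [m1 [c1 [He1 [Hm1 H1]]]]] [e2 [m2 [c2 [He2 [Hm2 H2]]]]].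
  pose proof (Lpos _ Hm1).
  exists (Rmin e1 (e2 / m1)), (m2 * m1), (m2 * c1 + c2). repeat split; auto.
  - apply Rmin_glb_lt; auto. apply Rdiv_lt_0_compat; lra.
  - intros s Hs. assert (Hb1 := Rmin_l e1 (e2/m1)). assert (Hb2 := Rmin_r e1 (e2/m1)).
    assert (Hb3 : m1 * Rabs (s - t) < e2) by (apply mul_lt_of_lt_div; auto; apply Rabs_lt_iff; lra).
    rewrite (H1 s) by lra. rewrite H2. ring.
    rewrite (H1 t) by lra. destruct (Rle_dec s t).
    + rewrite Rabs_left1 in Hb3 by lra. split; nra.
    + rewrite Rabs_right in Hb3 by lra. split; nra.
Qed.
(* [Felt] contains the identity and is closed under composition; the
   breakpoints of a composite lie among those of the first map and the
   preimages of those of the second. *)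
Lemma Felt_preimage_list f : Felt f -> forall L : list R, exists L', forall t, In (f t) L -> In t L'.
Proof.
  intros Hf L. induction L as [|b L [L' IH]].
  - exists nil. intros t [].
  - destruct (felt_surj f Hf b) as [t0 Ht0]. exists (t0 :: L'). intros t [H|H].
    + left. apply (Felt_inj f Hf). congruence.
    + right; auto.
Qed.
Lemma Felt_comp f g : Felt f -> Felt g -> Felt (fun s => g (f s)).
Proof.
  intros Hf Hg. constructor.
  - intros t Ht. rewrite (felt_out f Hf t Ht). apply (felt_out g Hg t Ht).
  - intros t. apply aff_right_comp; apply felt_right; auto.
  - intros t. apply aff_left_comp; apply felt_left; auto.
  - intros t Ht. apply aff_near_comp; apply felt_offA; auto. rewrite <- (felt_A f Hf). auto.
  - destruct (felt_breaks f Hf) as [B1 HB1]. destruct (felt_breaks g Hg) as [B2 HB2].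
    destruct (Felt_preimage_list f Hf B2) as [L' HL']. exists (B1 ++ L'). intros t Ht.
    apply aff_near_comp. apply HB1. intro; apply Ht; apply in_or_app; auto.
    apply HB2. intro; apply Ht; apply in_or_app; auto.
  - intros t. rewrite (felt_A f Hf), (felt_A g Hg). tauto.
  - intros v. destruct (felt_surj g Hg v) as [w Hw]. destruct (felt_surj f Hf w) as [t Ht].
    exists t. congruence.
Qed.
Lemma Felt_id : Felt (fun t => t).
Proof.
  constructor; auto.
  - intros t; exists 1, 1, 0; repeat split; auto; try lra; intros; ring.
  - intros t; exists 1, 1, 0; repeat split; auto; try lra; intros; ring.
  - intros t _; exists 1, 1, 0; repeat split; auto; try lra; intros; ring.
  - exists nil. intros t _; exists 1, 1, 0; repeat split; auto; try lra; intros; ring.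
  - tauto.
  - intros v; exists v; auto.
Qed.

Definition inv (f : R -> R) (v : R) : R := epsilon (inhabits 0) (fun t => f t = v).
Lemma inv_r f : Felt f -> forall v, f (inv f v) = v.
Proof. intros Hf v. unfold inv. apply epsilon_spec. apply (felt_surj f Hf). Qed.
Lemma inv_l f : Felt f -> forall t, inv f (f t) = t.
Proof. intros Hf t. apply (Felt_inj f Hf). apply inv_r; auto. Qed.
Lemma inv_affine f m c (U : R -> Prop) : Felt f -> 0 < m ->
  (forall s, U s -> f s = m * s + c) -> forall w, U ((w - c) / m) -> inv f w = / m * w + - c / m.
Proof.
  intros Hf Hm H w Hw. transitivity ((w - c) / m); [|field; lra].
  rewrite <- (inv_l f Hf ((w - c) / m)). f_equal. rewrite H by auto. field. lra.
Qed.

Lemma aff_right_inv f v : Felt f -> aff_right f (inv f v) -> aff_right (inv f) v.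
Proof.
  intros Hf [e [m [c [He [Hm H]]]]]. pose proof (Lpos _ Hm) as Hm0.
  assert (Hv : v = m * inv f v + c) by (rewrite <- H by lra; symmetry; apply inv_r; auto).
  set (t0 := inv f v) in *. clearbody t0. subst v.
  exists (m * e), (/ m), (- c / m). split; [nra|split; auto].
  intros w Hw. apply (inv_affine f m c _ Hf Hm0 H).
  assert (Hb := div_lt_bound (w - (m * t0 + c)) m e Hm0 ltac:(lra) ltac:(lra)).
  replace ((w - c) / m) with (t0 + (w - (m * t0 + c)) / m) by (field; lra). lra.
Qed.
Lemma aff_left_inv f v : Felt f -> aff_left f (inv f v) -> aff_left (inv f) v.
Proof.
  intros Hf [e [m [c [He [Hm H]]]]]. pose proof (Lpos _ Hm) as Hm0.
  assert (Hv : v = m * inv f v + c) by (rewrite <- H by lra; symmetry; apply inv_r; auto).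
  set (t0 := inv f v) in *. clearbody t0. subst v.
  exists (m * e), (/ m), (- c / m). split; [nra|split; auto].
  intros w Hw. apply (inv_affine f m c _ Hf Hm0 H).
  assert (Hb := div_lt_bound (m * t0 + c - w) m e Hm0 ltac:(lra) ltac:(lra)).
  replace ((w - c) / m) with (t0 - (m * t0 + c - w) / m) by (field; lra). lra.
Qed.
Lemma aff_near_inv f v : Felt f -> aff_near f (inv f v) -> aff_near (inv f) v.
Proof.
  intros Hf [e [m [c [He [Hm H]]]]]. pose proof (Lpos _ Hm) as Hm0.
  assert (Hv : v = m * inv f v + c) by (rewrite <- H by lra; symmetry; apply inv_r; auto).
  set (t0 := inv f v) in *. clearbody t0. subst v.
  exists (m * e), (/ m), (- c / m). split; [nra|split; auto].
  intros w Hw. apply (inv_affine f m c _ Hf Hm0 H).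
  assert (Hb := div_abs_lt_bound (w - (m * t0 + c)) m e Hm0 ltac:(apply Rabs_lt_iff; lra)).
  apply Rabs_lt_iff in Hb.
  replace ((w - c) / m) with (t0 + (w - (m * t0 + c)) / m) by (field; lra). lra.
Qed.

Lemma Felt_inv f : Felt f -> Felt (inv f).
Proof.
  intros Hf. pose proof (inv_r f Hf) as Hr.
  constructor.
  - intros t Ht. apply (Felt_inj f Hf). rewrite Hr. symmetry; apply (felt_out f Hf t Ht).
  - intros v. apply aff_right_inv, felt_right; auto.
  - intros v. apply aff_left_inv, felt_left; auto.
  - intros v Hv. apply aff_near_inv, felt_offA; auto. rewrite (felt_A f Hf), Hr. auto.
  - destruct (felt_breaks f Hf) as [B HB]. exists (map f B). intros v Hv.
    apply aff_near_inv; auto. apply HB. intro Hin. apply Hv. rewrite <- (Hr v). apply in_map; auto.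
  - intros v. rewrite (felt_A f Hf (inv f v)), Hr. tauto.
  - intros t. exists (f t). apply inv_l; auto.
Qed.

Fixpoint pl_chain (f : R -> R) (a : R) (l : list R) (v : R) : Prop :=
  match l with
  | nil => a = v /\ A a
  | b :: l' => a < b /\ A a /\ A (f a) /\
      (exists m c, Lam m /\ forall t, a <= t < b -> f t = m * t + c) /\ pl_chain f b l' v
  end.
Lemma chain_app f a l1 b l2 v : pl_chain f a l1 b -> pl_chain f b l2 v -> pl_chain f a (l1 ++ l2) v.
Proof.
  revert a. induction l1 as [|c l1 IH]; simpl; intros a H1 H2.
  - destruct H1 as [-> _]; auto.
  - destruct H1 as [? [? [? [? ?]]]]. repeat split; auto.
Qed.
Lemma chain_le f a l v : pl_chain f a l v -> a <= v.
Proof.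
  revert a. induction l as [|b l IH]; simpl; intros a H.
  - lra.
  - destruct H as [Hab [_ [_ [_ Hc]]]]. specialize (IH b Hc). lra.
Qed.
Lemma chain_A f a l v : pl_chain f a l v -> Forall A (a :: l).
Proof.
  revert a. induction l as [|b l IH]; simpl; intros a H.
  - constructor; [tauto|constructor].
  - destruct H as [? [? [? [? ?]]]]. constructor; auto.
Qed.
Lemma chain_in_bounds f a l v : pl_chain f a l v -> forall p, In p (a :: l) -> a <= p <= v.
Proof.
  revert a. induction l as [|b l IH]; simpl; intros a H p Hp.
  - destruct H as [-> _]. destruct Hp as [<-|[]]; lra.
  - destruct H as [Hab [_ [_ [_ Hc]]]]. destruct Hp as [<-|Hp].
    + pose proof (chain_le _ _ _ _ Hc). lra.
    + specialize (IH b Hc p Hp). lra.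
Qed.
Lemma chain_piece_r f a l v t : pl_chain f a l v -> a <= t < v ->
  exists p q m c, In p (a :: l) /\ p <= t < q /\ A p /\ A (f p) /\ Lam m /\
    (forall s, p <= s < q -> f s = m * s + c) /\ (forall s, p < s < q -> ~ In s (a :: l)).
Proof.
  revert a. induction l as [|b l IH]; simpl; intros a H Ht.
  - lra.
  - destruct H as [Hab [HA [HfA [[m [c [Hm Hp]]] Hc]]]].
    destruct (Rlt_dec t b).
    + exists a, b, m, c. repeat split; auto; try lra.
      intros s Hs [Hs'|Hs']. lra.
      pose proof (chain_in_bounds f b l v Hc s Hs'). lra.
    + destruct (IH b Hc ltac:(lra)) as [p [q [m' [c' [Hin [? [? [? [? [? Hno]]]]]]]]]].
      exists p, q, m', c'. split; [simpl; tauto|]. repeat (split; [auto|]).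
      intros s Hs [Hs'|Hs']. destruct (chain_in_bounds f b l v Hc p Hin). lra.
      apply (Hno s Hs); auto.
Qed.
Lemma chain_piece_l f a l v t : pl_chain f a l v -> a < t <= v ->
  exists p q m c, In p (a :: l) /\ In q (a :: l) /\ p < t <= q /\ A p /\ A (f p) /\ Lam m /\
    (forall s, p <= s < q -> f s = m * s + c) /\ (forall s, p < s < q -> ~ In s (a :: l)).
Proof.
  revert a. induction l as [|b l IH]; simpl; intros a H Ht.
  - destruct H; lra.
  - destruct H as [Hab [HA [HfA [[m [c [Hm Hp]]] Hc]]]].
    destruct (Rle_dec t b).
    + exists a, b, m, c. split; [simpl; auto|]. repeat split; auto; try lra.
      intros s Hs [Hs'|Hs']. lra.
      pose proof (chain_in_bounds f b l v Hc s Hs'). lra.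
    + destruct (IH b Hc ltac:(lra)) as [p [q [m' [c' [Hinp [Hin [? [? [? [? [? Hno]]]]]]]]]]].
      exists p, q, m', c'. split; [simpl; tauto|]. split; [simpl; tauto|]. repeat (split; [auto|]).
      intros s Hs [Hs'|Hs']. assert (p >= b).
      { destruct (Rlt_dec p b); [|lra]. exfalso. apply (Hno b). split; [lra|].
        destruct (chain_in_bounds f b l v Hc q Hin). lra. simpl; auto. }
      lra.
      apply (Hno s Hs); auto.
Qed.
Lemma nth_to_chain f : forall l a,
  Forall A (a :: l) ->
  (forall i, (S i < length (a :: l))%nat -> nth i (a :: l) 0 < nth (S i) (a :: l) 0) ->
  (forall i, (S i < length (a :: l))%nat ->
     A (f (nth i (a :: l) 0)) /\ exists lam c, Lam lam /\
       forall t, nth i (a :: l) 0 <= t < nth (S i) (a :: l) 0 -> f t = lam * t + c) ->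
  pl_chain f a l (last (a :: l) 0).
Proof.
  induction l as [|b l IH]; intros a HA Hinc Hp.
  - simpl. inversion HA; auto.
  - inversion HA; subst. simpl (pl_chain f a (b :: l) _).
    assert (H0 : (S 0 < length (a :: b :: l))%nat) by (simpl; lia).
    destruct (Hp 0%nat H0) as [HfA Hpc]. pose proof (Hinc 0%nat H0) as Hi0. simpl in Hi0.
    split; [auto|]. split; [auto|]. split; [auto|]. split; [auto|].
    replace (last (a :: b :: l) 0) with (last (b :: l) 0) by (destruct l; reflexivity).
    apply IH; auto.
    + intros i Hi. apply (Hinc (S i)). simpl in *; lia.
    + intros i Hi. apply (Hp (S i)). simpl in *; lia.
Qed.
Lemma chain_to_nth f : forall l a v, pl_chain f a l v ->
  last (a :: l) 0 = v /\ Forall A (a :: l) /\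
  (forall i, (S i < length (a :: l))%nat -> nth i (a :: l) 0 < nth (S i) (a :: l) 0) /\
  (forall i, (S i < length (a :: l))%nat ->
     A (f (nth i (a :: l) 0)) /\ exists lam c, Lam lam /\
       forall t, nth i (a :: l) 0 <= t < nth (S i) (a :: l) 0 -> f t = lam * t + c).
Proof.
  induction l as [|b l IH]; intros a v H.
  - simpl in H. destruct H as [-> HA]. split; [reflexivity|]. split; [constructor; auto|].
    split; intros i Hi; simpl in Hi; lia.
  - simpl in H. destruct H as [Hab [HA [HfA [Hpc Hc]]]].
    destruct (IH b v Hc) as [Hl [HAl [Hinc Hp]]].
    split; [rewrite <- Hl; destruct l; reflexivity|].
    split; [constructor; auto|].
    split.
    + intros [|i] Hi. simpl; auto. apply (Hinc i). simpl in *; lia.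
    + intros [|i] Hi. simpl; auto. apply (Hp i). simpl in *; lia.
Qed.

Lemma left_limit_affine f p t m c : cont_on_dom r f -> inDom r t -> 0 <= p < t ->
  (forall s, p < s < t -> f s = m * s + c) -> f t = m * t + c.
Proof.
  intros Hc Ht Hp H. set (D1 := fun s => p < s < t).
  assert (Hadh : adhDa D1 t).
  { intros alp Halp. exists (t - Rmin (alp / 2) ((t - p) / 2)).
    pose proof (Rmin_l (alp / 2) ((t - p) / 2)). pose proof (Rmin_r (alp / 2) ((t - p) / 2)).
    assert (0 < Rmin (alp / 2) ((t - p) / 2)) by (apply Rmin_glb_lt; lra).
    split; [unfold D1; lra|]. unfold R_dist. rewrite Rabs_left1; lra. }
  apply (single_limit f D1 (f t) (m * t + c) t Hadh).
  - apply (limit1_imp f (inDom r)); [unfold D1, inDom in *; intros; lra|apply Hc; auto].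
  - apply (limit1_ext (fun s => m * s + c)); [intros s Hs; symmetry; apply H; auto|].
    apply limit_plus; [apply limit_mul; [exact (limit_free (fun _ => m) D1 t t)|apply lim_x]|].
    exact (limit_free (fun _ => c) D1 t t).
Qed.
Lemma chain_aff_right f a l v t : pl_chain f a l v -> a <= t < v -> aff_right f t.
Proof.
  intros Hch Ht.
  destruct (chain_piece_r f a l v t Hch Ht) as [p [q [m [c [_ [Hpt [_ [_ [Hm [Hpc _]]]]]]]]]].
  exists (q - t), m, c. repeat split; auto; try lra. intros s Hs; apply Hpc; lra.
Qed.

Lemma chain_aff_near f a l v t : pl_chain f a l v -> a < t < v -> ~ In t (a :: l) -> aff_near f t.
Proof.
  intros Hch Ht Hn.
  destruct (chain_piece_r f a l v t Hch ltac:(lra)) as [p [q [m [c [Hin [Hpt [_ [_ [Hm [Hpc _]]]]]]]]]].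
  assert (p < t) by (destruct (Req_dec p t); [subst; contradiction|lra]).
  exists (Rmin (t - p) (q - t)), m, c. split; [apply Rmin_glb_lt; lra|split; auto].
  intros s Hs. pose proof (Rmin_l (t - p) (q - t)). pose proof (Rmin_r (t - p) (q - t)).
  apply Hpc; lra.
Qed.

Lemma chain_aff_left f a l v t : pl_chain f a l v -> cont_on_dom r f -> 0 <= a -> v <= r ->
  a < t < v -> aff_left f t.
Proof.
  intros Hch Hcont Ha Hv Ht.
  destruct (chain_piece_l f a l v t Hch ltac:(lra)) as [p [q [m [c [Hinp [Hq [Hpt [_ [_ [Hm [Hpc _]]]]]]]]]]].
  pose proof (chain_in_bounds f a l v Hch p Hinp).
  exists (t - p), m, c. repeat split; auto; try lra. intros s Hs.
  destruct (Req_dec s t) as [->|Hst]; [|apply Hpc; lra].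
  apply (left_limit_affine f p t m c Hcont); [unfold inDom; lra|lra|intros; apply Hpc; lra].
Qed.

Lemma chain_increasing f a l v : pl_chain f a l v -> cont_on_dom r f -> 0 <= a -> v <= r ->
  forall u w, a <= u < w -> w < v -> f u < f w.
Proof.
  intros Hch Hcont Ha Hv u w Hu Hw. apply increasing_of_aff; [lra| |]; intros t Ht.
  - apply (chain_aff_right f a l v); auto; lra.
  - apply (chain_aff_left f a l v); auto; lra.
Qed.

(* A chain maps A to A: each piece starts at a point of A with image in A
   and has slope in Lam. *)
Lemma chain_A_iff f a l v t : pl_chain f a l v -> a <= t < v -> (A t <-> A (f t)).
Proof.
  intros Hch Ht.
  destruct (chain_piece_r f a l v t Hch Ht) as [p [q [m [c [_ [Hpt [Hap [Hafp [Hm [Hpc _]]]]]]]]]].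
  assert (Hc : A c) by (replace c with (f p - m * p) by (rewrite Hpc; [ring|lra]); apply Asub; auto).
  rewrite (Hpc t) by lra. pose proof (Lpos _ Hm). split; intro HA.
  - auto.
  - replace t with (/ m * (m * t + c + - c)) by (field; lra). auto.
Qed.

Lemma last_piece_value f p m c : (forall t, inDom r t -> inDom r (f t)) ->
  (forall v, inDom r v -> exists t, inDom r t /\ f t = v) ->
  (forall u w, 0 <= u < w -> w < r -> f u < f w) ->
  0 <= p < r -> Lam m -> (forall s, p <= s < r -> f s = m * s + c) -> m * r + c = r.
Proof.
  intros Hmap Hsurj Hmono Hp Hm Hpc. pose proof (Lpos _ Hm).
  destruct (Rtotal_order (m * r + c) r) as [Hlt|[Heq|Hgt]]; auto; exfalso.
  - assert (Hfp := Hmap p ltac:(unfold inDom; lra)). unfold inDom in Hfp. rewrite Hpc in Hfp by lra.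
    destruct (Hsurj ((m * r + c + r) / 2)) as [w [Hw Hfw]]; [unfold inDom; nra|]. unfold inDom in Hw.
    destruct (Rle_dec p w) as [Hpw|Hpw].
    + rewrite Hpc in Hfw by lra. nra.
    + assert (Hfwp : f w < f p) by (apply Hmono; lra). rewrite (Hpc p) in Hfwp by lra. nra.
  - set (d := (m * r + c - r) / m).
    assert (Hd : 0 < d) by (unfold d; apply Rdiv_lt_0_compat; lra).
    set (s := Rmax p (r - d / 2)).
    assert (Hs1 : p <= s) by apply Rmax_l. assert (Hs2 : r - d/2 <= s) by apply Rmax_r.
    assert (Hs3 : s < r) by (unfold s; apply Rmax_lub_lt; lra).
    assert (Hfs := Hmap s ltac:(unfold inDom; lra)). unfold inDom in Hfs. rewrite Hpc in Hfs by lra.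
    assert (Hmd : m * d = m * r + c - r) by (unfold d; field; lra).
    nra.
Qed.

Lemma last_piece_aff_left f l : homeo_dom r f -> pl_chain f 0 l r ->
  (forall t, ~ inDom r t -> f t = t) -> aff_left f r.
Proof.
  intros [Hmap [Hcont [g [Hgmap [_ [_ Hfg]]]]]] Hch Hout. assert (Hrr : 0 < r <= r) by (pose proof hr; lra).
  destruct (chain_piece_l f 0 l r r Hch Hrr) as [p [q [m [c [Hinp [Hq [Hpt [_ [_ [Hm [Hpc _]]]]]]]]]]].
  pose proof (chain_in_bounds f 0 l r Hch p Hinp). pose proof (chain_in_bounds f 0 l r Hch q Hq).
  assert (Hmr : m * r + c = r).
  { apply (last_piece_value f p m c Hmap); [| |lra|auto|intros; apply Hpc; lra].
    - intros v Hv. exists (g v). auto.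
    - intros u w Hu Hw. apply (chain_increasing f 0 l r); auto; lra. }
  exists (r - p), m, c. repeat split; auto; try lra. intros s Hs.
  destruct (Req_dec s r) as [->|]; [rewrite Hout; [lra|unfold inDom; lra]|apply Hpc; lra].
Qed.

Lemma off_I_aff_right f t : (forall s, ~ inI s -> f s = s) -> t < alpha \/ beta <= t -> aff_right f t.
Proof.
  intros Hoff Ht. exists (if Rlt_dec t alpha then alpha - t else 1), 1, 0.
  destruct (Rlt_dec t alpha); (split; [lra|split; auto]);
    intros s Hs; rewrite Hoff; [ring|unfold inI; lra|ring|unfold inI; lra].
Qed.
Lemma off_I_aff_left f t : (forall s, ~ inI s -> f s = s) -> t <= alpha \/ beta < t -> aff_left f t.
Proof.
  intros Hoff Ht. exists (if Rle_dec t alpha then 1 else t - beta), 1, 0.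
  destruct (Rle_dec t alpha); (split; [lra|split; auto]);
    intros s Hs; rewrite Hoff; [ring|unfold inI; lra|ring|unfold inI; lra].
Qed.
Lemma off_I_aff_near f t : (forall s, ~ inI s -> f s = s) -> t < alpha \/ beta < t -> aff_near f t.
Proof.
  intros Hoff Ht. exists (if Rlt_dec t alpha then alpha - t else t - beta), 1, 0.
  destruct (Rlt_dec t alpha); (split; [lra|split; auto]);
    intros s Hs; rewrite Hoff; [ring|unfold inI; lra|ring|unfold inI; lra].
Qed.

Lemma inF_S_fixes_off_I f : inF_S r Lam A inI f -> forall t, ~ inI t -> f t = t.
Proof.
  intros [[_ [_ Hout]] Hsupp] t Ht. destruct (classic (inDom r t)) as [Hd|Hd]; [|apply Hout; auto].
  destruct (Req_dec (f t) t) as [|Hne]; [auto|]. exfalso; apply Ht; apply Hsupp; auto.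
Qed.

Lemma PL_data_chain f : PL_data r Lam A f -> exists l, pl_chain f 0 l r.
Proof.
  intros [l0 [Hlen [H0 [Hlast [HA [Hinc Hp]]]]]].
  destruct l0 as [|a l]; [simpl in Hlen; lia|]. simpl in H0. subst a.
  exists l. rewrite <- Hlast. apply nth_to_chain; auto.
Qed.

Lemma inF_Felt f : inF_S r Lam A inI f -> Felt f.
Proof.
  intros Hf. pose proof (inF_S_fixes_off_I f Hf) as Hoff.
  destruct Hf as [[Hhom [HPL Hout]] _]. destruct (PL_data_chain f HPL) as [l Hch].
  pose proof Hhom as [_ [Hcont [g [_ [_ [_ Hfg]]]]]].
  assert (Hal := halpha). assert (Hbe := hbeta). assert (Hab := hab).
  assert (Hbrk : forall t, alpha < t < beta -> ~ In t (0 :: l) -> aff_near f t)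
    by (intros t Ht Hn; apply (chain_aff_near f 0 l r); auto; lra).
  constructor.
  - exact Hoff.
  - intros t. destruct (classic (alpha <= t < beta)) as [Ht|Ht].
    + apply (chain_aff_right f 0 l r); auto; lra.
    + apply off_I_aff_right; auto; lra.
  - intros t. destruct (classic (alpha < t <= beta)) as [Ht|Ht]; [|apply off_I_aff_left; auto; lra].
    destruct (Req_dec t r) as [->|Htr]; [apply (last_piece_aff_left f l); auto|].
    apply (chain_aff_left f 0 l r); auto; lra.
  - intros t HnA. destruct (classic (alpha < t < beta)) as [Ht|Ht].
    + apply Hbrk; auto. intro Hin. apply HnA.
      pose proof (chain_A f 0 l r Hch) as HA. rewrite Forall_forall in HA. auto.
    + apply off_I_aff_near; auto.
      destruct (Req_dec t alpha) as [->|]; [exfalso; auto|].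
      destruct (Req_dec t beta) as [->|]; [exfalso; auto|]. lra.
  - exists (alpha :: beta :: 0 :: l). intros t Hn. destruct (classic (alpha < t < beta)) as [Ht|Ht].
    + apply Hbrk; auto. intro Hin; apply Hn; simpl; auto.
    + apply off_I_aff_near; auto.
      destruct (Req_dec t alpha) as [->|]; [exfalso; apply Hn; simpl; auto|].
      destruct (Req_dec t beta) as [->|]; [exfalso; apply Hn; simpl; auto|]. lra.
  - intros t. destruct (classic (inI t)) as [Ht|Ht]; [|rewrite Hoff; tauto].
    unfold inI in Ht. apply (chain_A_iff f 0 l r); auto; lra.
  - intros v. destruct (classic (inDom r v)) as [Hv|Hv]; [exists (g v); auto|exists v; auto].
Qed.

Definition in_open (u v b : R) : bool := if Rlt_dec u b then if Rlt_dec b v then true else false else false.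
Definition count_in (B : list R) u v := length (filter (in_open u v) B).
Lemma in_open_true u v b : in_open u v b = true <-> u < b < v.
Proof. unfold in_open. destruct (Rlt_dec u b); destruct (Rlt_dec b v); split; intros; try lra; auto; discriminate. Qed.
Lemma count_in_mono B u v u' v' : u <= u' -> v' <= v -> (count_in B u' v' <= count_in B u v)%nat.
Proof.
  intros Hu Hv. unfold count_in. induction B as [|b B IH]; simpl; auto.
  destruct (in_open u' v' b) eqn:E1.
  - apply in_open_true in E1. assert (E2 : in_open u v b = true) by (apply in_open_true; lra). rewrite E2. simpl. lia.
  - destruct (in_open u v b); simpl; lia.
Qed.
Lemma count_in_drop B u v u' v' t : u <= u' -> v' <= v -> In t B -> u < t < v -> ~ (u' < t < v') ->
  (count_in B u' v' < count_in B u v)%nat.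
Proof.
  intros Hu Hv Hin Ht Hn. unfold count_in. induction B as [|b B IH]; simpl in *; [contradiction|].
  destruct Hin as [<-|Hin].
  - assert (E1 : in_open u' v' b = false) by (destruct (in_open u' v' b) eqn:E; auto; apply in_open_true in E; contradiction).
    assert (E2 : in_open u v b = true) by (apply in_open_true; auto). rewrite E1, E2. simpl.
    pose proof (count_in_mono B u v u' v' Hu Hv). unfold count_in in H. lia.
  - specialize (IH Hin). destruct (in_open u' v' b) eqn:E1.
    + apply in_open_true in E1. assert (E2 : in_open u v b = true) by (apply in_open_true; lra). rewrite E2. simpl. lia.
    + destruct (in_open u v b); simpl; lia.
Qed.
Lemma agree_at_left_germ y z u t : aff_left y t -> aff_left z t -> u < t ->
  (forall s, u <= s < t -> y s = z s) -> y t = z t.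
Proof.
  intros [e1 [m1 [c1 [He1 [_ H1]]]]] [e2 [m2 [c2 [He2 [_ H2]]]]] Hut Hagree.
  set (d := Rmin (Rmin e1 e2) (t - u)).
  assert (Hd1 : d <= e1 /\ d <= e2 /\ d <= t - u)
    by (unfold d; repeat split; [eapply Rle_trans; [apply Rmin_l|apply Rmin_l]
       |eapply Rle_trans; [apply Rmin_l|apply Rmin_r]|apply Rmin_r]).
  assert (Hd : 0 < d) by (unfold d; repeat apply Rmin_glb_lt; lra).
  destruct (lines_agree_on m1 c1 m2 c2 (t - d) t) as [-> ->]; [lra| |].
  - intros s Hs. rewrite <- H1, <- H2 by lra. apply Hagree; lra.
  - rewrite H1, H2 by lra. reflexivity.
Qed.

Lemma agree_past_aff_near y z u t : aff_near y t -> aff_near z t -> u < t ->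
  (forall s, u <= s < t -> y s = z s) -> exists e, 0 < e /\ forall s, t <= s < t + e -> y s = z s.
Proof.
  intros [e1 [m1 [c1 [He1 [_ H1]]]]] [e2 [m2 [c2 [He2 [_ H2]]]]] Hut Hagree.
  set (d := Rmin (Rmin e1 e2) (t - u)).
  assert (Hd1 : d <= e1 /\ d <= e2 /\ d <= t - u)
    by (unfold d; repeat split; [eapply Rle_trans; [apply Rmin_l|apply Rmin_l]
       |eapply Rle_trans; [apply Rmin_l|apply Rmin_r]|apply Rmin_r]).
  assert (Hd : 0 < d) by (unfold d; repeat apply Rmin_glb_lt; lra).
  destruct (lines_agree_on m1 c1 m2 c2 (t - d) t) as [-> ->]; [lra| |].
  - intros s Hs. rewrite <- H1, <- H2 by lra. apply Hagree; lra.
  - exists d. split; auto. intros s Hs. rewrite H1, H2 by lra. reflexivity.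
Qed.

Lemma aff_propagate f u v m c e : Lam m -> u < v -> 0 < e ->
  (forall s, u <= s < u + e -> f s = m * s + c) ->
  (forall t, u < t < v -> aff_near f t) -> forall s, u <= s < v -> f s = m * s + c.
Proof.
  intros Hm Huv He H0 Hsm.
  set (line := fun s => m * s + c).
  assert (Hline : forall t, aff_near line t) by (intros t; exists 1, m, c; repeat split; auto; lra).
  assert (Hpast : forall t, u < t < v -> (forall s, u <= s < t -> f s = line s) ->
      exists d, 0 < d /\ forall s, t <= s < t + d -> f s = line s)
    by (intros t Ht IH; apply (agree_past_aff_near f line u t); auto; lra).
  assert (H : forall s, u <= s <= v -> s < v -> f s = line s).
  { apply (cont_induction (fun s => s < v -> f s = line s) u v); [lra|intros; apply H0; lra| |].
    - intros t Ht IH. destruct (Req_dec t u) as [->|Htu].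
      + exists e. split; [auto|]. intros s Hs _. apply H0; lra.
      + destruct (Hpast t ltac:(lra)) as [d [Hd Hfd]]; [intros s Hs; apply IH; lra|].
        exists d. split; auto.
    - intros t Ht IH Htv. destruct (Hpast t ltac:(lra)) as [d [Hd Hfd]]; [intros s Hs; apply IH; lra|].
      apply Hfd; lra. }
  intros s Hs. apply H; lra.
Qed.

Lemma one_piece_chain f u v : Felt f -> u < v -> A u -> A v ->
  (forall t, u < t < v -> aff_near f t) -> pl_chain f u (v :: nil) v.
Proof.
  intros Hf Huv Hu Hv Hsm. destruct (felt_right f Hf u) as [e [m [c [He [Hm Hpc]]]]].
  simpl. split; [lra|split; [auto|split; [apply (felt_A f Hf u); auto|split; [|split; auto]]]].
  exists m, c. split; auto. apply (aff_propagate f u v m c e); auto.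
Qed.

(* An element of [Felt] is a chain between any two points of A: induction on
   the number of listed breakpoints in (u,v), splitting at an interior
   breakpoint, which lies in A. *)
Lemma build_chain f B : Felt f -> (forall t, ~ In t B -> aff_near f t) ->
  forall n u v, u < v -> A u -> A v -> (count_in B u v <= n)%nat -> exists l, pl_chain f u l v.
Proof.
  intros Hf HB. induction n as [|n IH]; intros u v Huv Hu Hv Hc;
    (destruct (classic (exists t, u < t < v /\ ~ aff_near f t)) as [[t [Ht Hns]]|Hno];
     [assert (HtB : In t B) by (apply NNPP; intro Hn; apply Hns, HB, Hn)
     |exists (v :: nil); apply one_piece_chain; auto; intros t Ht;
      apply NNPP; intro Hn; apply Hno; eauto]).
  - pose proof (count_in_drop B u v u t t ltac:(lra) ltac:(lra) HtB Ht ltac:(lra)). lia.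
  - assert (HtA : A t) by (apply NNPP; intro HnA; apply Hns, (felt_offA f Hf), HnA).
    pose proof (count_in_drop B u v u t t ltac:(lra) ltac:(lra) HtB Ht ltac:(lra)).
    pose proof (count_in_drop B u v t v t ltac:(lra) ltac:(lra) HtB Ht ltac:(lra)).
    destruct (IH u t ltac:(lra) Hu HtA ltac:(lia)) as [l1 Hl1].
    destruct (IH t v ltac:(lra) HtA Hv ltac:(lia)) as [l2 Hl2].
    exists (l1 ++ l2). apply (chain_app f u l1 t l2 v); auto.
Qed.

Lemma Felt_maps_dom f : Felt f -> forall t, inDom r t -> inDom r (f t).
Proof.
  intros Hf t Ht. assert (Hal := halpha). assert (Hbe := hbeta). assert (Hab := hab).
  destruct (classic (inI t)) as [Hi|Hi]; [|rewrite (felt_out f Hf t Hi); auto].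
  unfold inI in Hi. assert (f alpha = alpha) by (apply (felt_out f Hf); unfold inI; lra).
  assert (f beta = beta) by (apply (felt_out f Hf); unfold inI; lra).
  assert (f alpha < f t) by (apply Felt_mono; auto; lra).
  assert (f t < f beta) by (apply Felt_mono; auto; lra). unfold inDom; lra.
Qed.
Lemma Felt_cont_on_dom f : Felt f -> cont_on_dom r f.
Proof.
  intros Hf t Ht eps Heps. destruct (Felt_cont f Hf t eps Heps) as [d [Hd H]].
  exists d. split; auto. intros x [Hx Hxd]. simpl in *. unfold Rdist in *. apply H; auto.
Qed.
Lemma Felt_inF f : Felt f -> inF_S r Lam A inI f.
Proof.
  intros Hf. assert (Hal := halpha). assert (Hbe := hbeta). assert (Hab := hab). assert (Hr0 := hr).
  assert (Hfi := Felt_inv f Hf).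
  split; [split; [|split]|].
  - split; [apply Felt_maps_dom; auto|]. split; [apply Felt_cont_on_dom; auto|].
    exists (inv f). split; [apply Felt_maps_dom; auto|]. split; [apply Felt_cont_on_dom; auto|].
    split; intros; [apply inv_l|apply inv_r]; auto.
  - destruct (felt_breaks f Hf) as [B HB].
    destruct (build_chain f B Hf HB (count_in B 0 r) 0 r Hr0 A0 Ar (le_n _)) as [l Hl].
    destruct (chain_to_nth f l 0 r Hl) as [Hlast [HA [Hinc Hp]]].
    exists (0 :: l). split; [destruct l; simpl in *; [destruct Hl; lra|lia]|].
    split; [reflexivity|]. auto.
  - intros t Ht. apply (felt_out f Hf). unfold inI, inDom in *. lra.
  - intros t Ht Hne. destruct (classic (inI t)); auto. exfalso; apply Hne; apply (felt_out f Hf); auto.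
Qed.

(* A is dense in R: since Lam <> {1}, A contains arbitrarily small positive
   numbers p^N (a - 1) r, and A contains their integer multiples. *)
Lemma Lam_pow a n : Lam a -> Lam (a ^ n).
Proof. intros Ha. induction n; simpl; auto. Qed.
Lemma A_Zmul d : A d -> forall z, A (IZR z * d).
Proof.
  intros Hd z. induction z using Z.peano_ind.
  - simpl. replace (0 * d) with 0 by ring. auto.
  - rewrite succ_IZR. replace ((IZR z + 1) * d) with (IZR z * d + d) by ring. auto.
  - rewrite <- Z.sub_1_r, minus_IZR. replace ((IZR z - 1) * d) with (IZR z * d + - d) by ring. auto.
Qed.
Lemma A_small_pos : forall eps, 0 < eps -> exists d, A d /\ 0 < d < eps.
Proof.
  intros eps Heps. destruct Lne as [a [Ha Ha1]]. pose proof (Lpos _ Ha). assert (Hr := hr).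
  set (p := if Rlt_dec a 1 then a else / a).
  assert (Hp : Lam p /\ 0 < p < 1).
  { unfold p; destruct (Rlt_dec a 1). split; auto; lra. split; auto.
    split. apply Rinv_0_lt_compat; lra. rewrite <- Rinv_1. apply Rinv_lt_contravar; lra. }
  destruct Hp as [HpL Hp].
  set (d0 := Rabs (a * r - r)).
  assert (Hd0 : A d0).
  { unfold d0. unfold Rabs; destruct Rcase_abs. apply Aopp. apply Asub; auto. apply Asub; auto. }
  assert (Hd0p : 0 < d0).
  { unfold d0. apply Rabs_pos_lt. intro H1. apply Ha1. assert ((a - 1) * r = 0) by lra.
    apply Rmult_integral in H0 as [H0|H0]; lra. }
  destruct (pow_lt_1_zero p ltac:(rewrite Rabs_right; lra) (eps / d0) ltac:(apply Rdiv_lt_0_compat; lra)) as [N HN].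
  specialize (HN N (le_n _)). rewrite Rabs_right in HN by (left; apply pow_lt; lra).
  exists (p ^ N * d0). split; [apply Amul; auto; apply Lam_pow; auto|].
  split. apply Rmult_lt_0_compat; auto; apply pow_lt; lra.
  apply (Rmult_lt_compat_r d0) in HN; auto. unfold Rdiv in HN. rewrite Rmult_assoc, Rinv_l in HN; lra.
Qed.
Lemma density : forall a b, a < b -> exists t, A t /\ a < t < b.
Proof.
  intros a b Hab. destruct (A_small_pos (b - a) ltac:(lra)) as [d [Hd Hdp]].
  destruct (archimed (a / d)) as [H1 H2].
  exists (IZR (up (a / d)) * d). split; [apply A_Zmul; auto|].
  assert (Ha : a = (a / d) * d) by (field; lra).
  split.
  - rewrite Ha at 1. apply Rmult_lt_compat_r; lra.
  - assert (IZR (up (a / d)) * d <= (a / d + 1) * d) by (apply Rmult_le_compat_r; lra).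
    nra.
Qed.

Lemma aff_near_ext f g t : (forall s, f s = g s) -> aff_near f t -> aff_near g t.
Proof. intros H [e [m [c [He [Hm Hl]]]]]. exists e, m, c. repeat split; auto. intros; rewrite <- H; auto. Qed.
Lemma aff_near_cancel_inner f g u : aff_near g u -> aff_near (fun t => f (g t)) u -> aff_near f (g u).
Proof.
  intros [e [m [c [He [Hm Hg]]]]] [e2 [m2 [c2 [He2 [Hm2 Hfg]]]]].
  pose proof (Lpos _ Hm).
  assert (Hgu : g u = m * u + c) by (apply Hg; lra).
  exists (m * Rmin e e2), (m2 / m), (c2 - m2 * c / m).
  assert (Hmin := Rmin_l e e2). assert (Hmin2 := Rmin_r e e2).
  assert (Hmp : 0 < Rmin e e2) by (apply Rmin_glb_lt; auto).
  split; [nra|]. split; [unfold Rdiv; auto|].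
  intros w Hw. set (s := (w - c) / m).
  assert (Hs : s - u = (w - g u) / m) by (unfold s; rewrite Hgu; field; lra).
  assert (Hb : Rabs (s - u) < Rmin e e2) by (rewrite Hs; apply div_abs_lt_bound; auto; apply Rabs_lt_iff; lra).
  apply Rabs_lt_iff in Hb.
  assert (Hgs : g s = w) by (rewrite Hg by lra; unfold s; field; lra).
  rewrite <- Hgs, Hfg by lra. rewrite Hgs. unfold s; field; lra.
Qed.
Lemma aff_near_cancel_outer f h u : aff_near h (f u) ->
  (forall eps, 0 < eps -> exists d, 0 < d /\ forall s, Rabs (s - u) < d -> Rabs (f s - f u) < eps) ->
  aff_near (fun t => h (f t)) u -> aff_near f u.
Proof.
  intros [e [m [c [He [Hm Hh]]]]] Hc [e2 [m2 [c2 [He2 [Hm2 Hhf]]]]].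
  pose proof (Lpos _ Hm).
  destruct (Hc e He) as [d [Hd Hcd]].
  exists (Rmin d e2), (m2 / m), ((c2 - c) / m).
  assert (Hmin := Rmin_l d e2). assert (Hmin2 := Rmin_r d e2).
  split; [apply Rmin_glb_lt; auto|]. split; [unfold Rdiv; auto|].
  intros s Hs. specialize (Hcd s ltac:(apply Rabs_lt_iff; lra)). apply Rabs_lt_iff in Hcd.
  specialize (Hhf s ltac:(lra)). rewrite Hh in Hhf by lra.
  apply (Rmult_eq_reg_l m); [|lra]. field_simplify; [|lra]. lra.
Qed.
Lemma Felt_moves_up_near f t : Felt f -> t < f t ->
  exists d, 0 < d /\ forall s, Rabs (s - t) < d -> s < f s.
Proof.
  intros Hf Ht. assert (Heps : 0 < (f t - t) / 2) by lra.
  destruct (Felt_cont f Hf t _ Heps) as [d [Hd Hc]].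
  exists (Rmin d ((f t - t) / 2)). split; [apply Rmin_glb_lt; lra|].
  intros s Hs. pose proof (Rmin_l d ((f t - t) / 2)). pose proof (Rmin_r d ((f t - t) / 2)).
  assert (Hfs := Hc s ltac:(lra)). apply Rabs_lt_iff in Hfs. apply Rabs_lt_iff in Hs. lra.
Qed.
Lemma Felt_moves_down_near f t : Felt f -> f t < t ->
  exists d, 0 < d /\ forall s, Rabs (s - t) < d -> f s < s.
Proof.
  intros Hf Ht. assert (Heps : 0 < (t - f t) / 2) by lra.
  destruct (Felt_cont f Hf t _ Heps) as [d [Hd Hc]].
  exists (Rmin d ((t - f t) / 2)). split; [apply Rmin_glb_lt; lra|].
  intros s Hs. pose proof (Rmin_l d ((t - f t) / 2)). pose proof (Rmin_r d ((t - f t) / 2)).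
  assert (Hfs := Hc s ltac:(lra)). apply Rabs_lt_iff in Hfs. apply Rabs_lt_iff in Hs. lra.
Qed.

Lemma iterF_comm n g t : iterF n g (g t) = g (iterF n g t).
Proof. induction n; simpl; auto. unfold rcomp. rewrite IHn. auto. Qed.
Lemma iterF_add k n g t : iterF (k + n) g t = iterF k g (iterF n g t).
Proof. induction k; simpl; auto. unfold rcomp. rewrite IHk. auto. Qed.
Lemma iterF_Felt n g : Felt g -> Felt (iterF n g).
Proof.
  intros Hg. induction n.
  - apply Felt_id.
  - apply (Felt_comp (iterF n g) g); auto.
Qed.

End Elements.

Class Moving {St : Setting} := {
  xx : R -> R;
  Hxx : Felt xx;
  hfix : forall t, inI t -> sA t -> xx t <> t
}.

Section Centralizer.
Context {St : Setting} {X : Moving}.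
Local Notation Lam := sLam.
Local Notation A := sA.
Local Notation alpha := salpha.
Local Notation beta := sbeta.
Local Notation x := xx.
#[local] Hint Resolve L1 Lmul Linv A0 Aadd Aopp Amul Ar hAalpha hAbeta : core.

Definition comm (y : R -> R) := forall t, y (x t) = x (y t).
Definition Cent (y : R -> R) := Felt y /\ comm y.
(* Agreement of two elements of C(x) on [alpha,t) extends past a point t of
   I ∩ A: x moves t, and conjugating by x carries the agreement across t. *)
Lemma cent_agree_past_moved y z t : Cent y -> Cent z -> alpha < t < beta -> A t ->
  (forall s, alpha <= s < t -> y s = z s) -> exists e, 0 < e /\ forall s, t <= s < t + e -> y s = z s.
Proof.
  intros [Hy Cy] [Hz Cz] Ht HA IH. assert (Hx := Hxx).
  assert (Hxa : x alpha = alpha) by (apply (felt_out x Hx); unfold inI; lra).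
  assert (Hxt : x t <> t) by (apply hfix; auto; unfold inI; lra).
  destruct (Rtotal_order t (x t)) as [Hlt|[Heq|Hgt]]; [|exfalso; apply Hxt; auto|].
  - exists (x t - t). split; [lra|]. intros s Hs.
    set (w := inv x s). assert (Hw : x w = s) by apply (inv_r x Hx).
    assert (w < t) by (apply (Felt_lt x Hx); lra).
    assert (alpha < w) by (apply (Felt_lt x Hx); lra).
    rewrite <- Hw, Cy, Cz, IH; auto; lra.
  - assert (Hpos : 0 < t - x t) by lra.
    destruct (Felt_cont x Hx t (t - x t) Hpos) as [d [Hd Hc]].
    exists d. split; [auto|]. intros s Hs.
    assert (Hxs : x s < t) by (specialize (Hc s ltac:(apply Rabs_lt_iff; lra)); apply Rabs_lt_iff in Hc; lra).
    assert (alpha < x s) by (rewrite <- Hxa; apply (Felt_lt x Hx); lra).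
    apply (Felt_inj x Hx). rewrite <- Cy, <- Cz. apply IH; lra.
Qed.

Lemma cent_germ_eq y z : Cent y -> Cent z -> forall e, 0 < e -> (forall s, alpha <= s < alpha + e -> y s = z s) ->
  forall t, y t = z t.
Proof.
  intros Cy Cz e He H0. pose proof Cy as [Hy _]. pose proof Cz as [Hz _].
  assert (Hal := halpha). assert (Hbe := hbeta). assert (Hab := hab).
  assert (Hm : forall s, alpha <= s <= beta -> y s = z s).
  { apply (cont_induction (fun s => y s = z s) alpha beta); [lra|apply H0; lra| |].
    - intros t Ht IH. destruct (Req_dec t alpha) as [->|Hta].
      { exists e. split; [auto|]. intros s Hs; apply H0; lra. }
      destruct (classic (A t)) as [HA|HnA].
      + apply cent_agree_past_moved; auto; [lra|intros; apply IH; lra].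
      + apply (agree_past_aff_near y z alpha t); try apply felt_offA; auto; [lra|intros; apply IH; lra].
    - intros t Ht IH. apply (agree_at_left_germ y z alpha t); try apply felt_left; auto; lra. }
  intros t. destruct (classic (alpha <= t <= beta)) as [Ht|Ht]; auto.
  rewrite (felt_out y Hy), (felt_out z Hz); auto; unfold inI; lra.
Qed.

Definition germ_slope (y : R -> R) m := exists e, 0 < e /\
  forall s, alpha <= s < alpha + e -> y s = alpha + m * (s - alpha).
Lemma Felt_germ_slope y : Felt y -> exists m, Lam m /\ germ_slope y m.
Proof.
  intros Hy. destruct (felt_right y Hy alpha) as [e [m [c [He [Hm H]]]]].
  assert (Hya : y alpha = alpha) by (apply (felt_out y Hy); unfold inI; lra).
  rewrite H in Hya by lra.
  exists m. split; auto. exists e. split; auto. intros s Hs. rewrite H by lra. lra.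
Qed.
Lemma germ_slope_uniq y m1 m2 : germ_slope y m1 -> germ_slope y m2 -> m1 = m2.
Proof.
  intros [e1 [He1 H1]] [e2 [He2 H2]].
  set (s := alpha + Rmin e1 e2 / 2).
  assert (Hm := Rmin_l e1 e2). assert (Hm2 := Rmin_r e1 e2).
  assert (Hp : 0 < Rmin e1 e2) by (apply Rmin_glb_lt; auto).
  assert (E : alpha + m1 * (s - alpha) = alpha + m2 * (s - alpha)) by (rewrite <- H1, <- H2; unfold s; auto; lra).
  assert (Hs : s - alpha <> 0) by (unfold s; lra).
  apply (Rmult_eq_reg_r (s - alpha)); auto. lra.
Qed.
Lemma germ_slope_comp y z m n : 0 < m -> germ_slope y m -> germ_slope z n -> germ_slope (fun t => z (y t)) (n * m).
Proof.
  intros Hm [e1 [He1 H1]] [e2 [He2 H2]].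
  exists (Rmin e1 (e2 / m)). split.
  { apply Rmin_glb_lt; auto. apply Rdiv_lt_0_compat; auto. }
  intros s Hs. assert (Hb1 := Rmin_l e1 (e2 / m)). assert (Hb2 := Rmin_r e1 (e2 / m)).
  assert (Hms : m * (s - alpha) < e2) by (apply mul_lt_of_lt_div; lra).
  rewrite H1 by lra. rewrite H2; [ring|].
  assert (0 <= m * (s - alpha)) by (apply Rmult_le_pos; lra). lra.
Qed.
Lemma germ_slope_inv y m : Felt y -> 0 < m -> germ_slope y m -> germ_slope (inv y) (/ m).
Proof.
  intros Hy Hm [e [He H]]. exists (m * e). split; [nra|].
  intros s Hs. set (w := alpha + (s - alpha) / m).
  assert (Hw : 0 <= (s - alpha) / m < e) by (apply div_lt_bound; auto; lra).
  assert (Hyw : y w = s) by (rewrite H; [unfold w; field; lra|unfold w; lra]).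
  rewrite <- Hyw, inv_l by auto. rewrite Hyw. unfold w. field. lra.
Qed.
Lemma germ_slope_id : germ_slope (fun t => t) 1.
Proof. exists 1. split; [lra|]. intros; ring. Qed.
Lemma germ_slope_iter g m n : 0 < m -> germ_slope g m -> germ_slope (iterF n g) (m ^ n).
Proof.
  intros Hm Hg. induction n.
  - simpl. apply germ_slope_id.
  - simpl. unfold rcomp. replace (m * m ^ n) with (m * m ^ n) by ring.
    apply (germ_slope_comp (iterF n g) g (m ^ n) m); auto. apply pow_lt; auto.
Qed.
Lemma Cent_comp y z : Cent y -> Cent z -> Cent (fun t => z (y t)).
Proof.
  intros [Hy Cy] [Hz Cz]. split; [apply Felt_comp; auto|]. intros t. rewrite Cy, Cz. auto.
Qed.
Lemma Cent_inv y : Cent y -> Cent (inv y).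
Proof.
  intros [Hy Cy]. split; [apply Felt_inv; auto|]. intros t. apply (Felt_inj y Hy).
  rewrite inv_r, Cy, inv_r by auto. auto.
Qed.
Lemma Cent_id : Cent (fun t => t).
Proof. split; [apply Felt_id|]. intros t; auto. Qed.
Lemma Cent_x : Cent x.
Proof. split; [apply Hxx|]. intros t; auto. Qed.
Lemma Cent_iter n y : Cent y -> Cent (iterF n y).
Proof.
  intros Hy. induction n.
  - apply Cent_id.
  - apply (Cent_comp (iterF n y) y); auto.
Qed.
Definition Slope nu := exists y, Cent y /\ germ_slope y nu.
Lemma Slope_pos nu : Slope nu -> 0 < nu.
Proof.
  intros [y [[Hy _] Hs]]. destruct (Felt_germ_slope y Hy) as [m [Hm Hs']].
  rewrite (germ_slope_uniq y nu m); auto. apply Lpos; auto.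
Qed.
Lemma Slope_mul a b : Slope a -> Slope b -> Slope (a * b).
Proof.
  intros Ha Hb. pose proof (Slope_pos a Ha). destruct Ha as [y [Cy Hy]]. destruct Hb as [z [Cz Hz]].
  exists (fun t => z (y t)). split; [apply Cent_comp; auto|].
  rewrite Rmult_comm. apply germ_slope_comp; auto.
Qed.
Lemma Slope_inv a : Slope a -> Slope (/ a).
Proof.
  intros Ha. pose proof (Slope_pos a Ha). destruct Ha as [y [Cy Hy]].
  exists (inv y). split; [apply Cent_inv; auto|]. apply germ_slope_inv; auto. apply Cy.
Qed.
Lemma Slope_1 : Slope 1.
Proof. exists (fun t => t). split; [apply Cent_id|apply germ_slope_id]. Qed.
Lemma cent_slope_eq y z nu : Cent y -> Cent z -> germ_slope y nu -> germ_slope z nu -> forall t, y t = z t.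
Proof.
  intros Cy Cz [e1 [He1 H1]] [e2 [He2 H2]].
  apply (cent_germ_eq y z Cy Cz (Rmin e1 e2)). apply Rmin_glb_lt; auto.
  intros s Hs. assert (Hm := Rmin_l e1 e2). assert (Hm2 := Rmin_r e1 e2).
  rewrite H1, H2 by lra. auto.
Qed.

Definition zpowP (g y : R -> R) (a : Z) : Prop :=
  match a with
  | Z0 => forall t, y t = t
  | Zpos p => forall t, y t = iterF (Pos.to_nat p) g t
  | Zneg p => forall t, iterF (Pos.to_nat p) g (y t) = t
  end.
Lemma zpowP_is_Zpow g y a : zpowP g y a -> is_Zpow g a y.
Proof. destruct a; simpl; intro H; apply functional_extensionality; auto. Qed.

Lemma cent_pow_of_slope g y nu0 nu a : Cent g -> germ_slope g nu0 -> Cent y -> germ_slope y nu ->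
  0 < nu0 -> 0 < nu -> ln nu = IZR a * ln nu0 -> zpowP g y a.
Proof.
  intros Cg Hg Cy Hy Hnu0p Hnup Hln. destruct a as [|p|p]; simpl.
  - assert (nu = 1) by (apply ln_inv; auto; [lra|]; rewrite Hln, ln_1; simpl; ring). subst nu.
    apply (cent_slope_eq y (fun t => t) 1 Cy Cent_id Hy germ_slope_id).
  - apply (cent_slope_eq y (iterF (Pos.to_nat p) g) nu Cy (Cent_iter _ g Cg) Hy).
    replace nu with (nu0 ^ Pos.to_nat p); [apply germ_slope_iter; auto|].
    apply ln_inv; auto; [apply pow_lt; auto|]. rewrite ln_pow, Hln by auto.
    rewrite INR_IZR_INZ, positive_nat_Z. reflexivity.
  - intros t. apply (cent_slope_eq (fun t => iterF (Pos.to_nat p) g (y t)) (fun t => t) 1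
      (Cent_comp y _ Cy (Cent_iter _ g Cg)) Cent_id); [|apply germ_slope_id].
    replace 1 with (nu0 ^ Pos.to_nat p * nu); [apply germ_slope_comp; auto; apply germ_slope_iter; auto|].
    apply ln_inv; [apply Rmult_lt_0_compat; auto; apply pow_lt; auto|lra|].
    rewrite ln_1, ln_mult, ln_pow, Hln by (auto; apply pow_lt; auto).
    rewrite INR_IZR_INZ, positive_nat_Z, <- Pos2Z.opp_pos, opp_IZR. ring.
Qed.

Definition LogSlope l := Slope (exp l).
Lemma LogSlope_add a b : LogSlope a -> LogSlope b -> LogSlope (a + b).
Proof. unfold LogSlope; intros. rewrite exp_plus. apply Slope_mul; auto. Qed.
Lemma LogSlope_opp a : LogSlope a -> LogSlope (- a).
Proof. unfold LogSlope; intros. rewrite exp_Ropp. apply Slope_inv; auto. Qed.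
Lemma LogSlope_0 : LogSlope 0.
Proof. unfold LogSlope. rewrite exp_0. apply Slope_1. Qed.
Lemma LogSlope_Z a : LogSlope a -> forall z, LogSlope (IZR z * a).
Proof.
  intros Ha z. induction z using Z.peano_ind.
  - simpl. rewrite Rmult_0_l. apply LogSlope_0.
  - rewrite succ_IZR. replace ((IZR z + 1) * a) with (IZR z * a + a) by ring. apply LogSlope_add; auto.
  - rewrite <- Z.sub_1_r, minus_IZR. replace ((IZR z - 1) * a) with (IZR z * a + - a) by ring.
    apply LogSlope_add; auto. apply LogSlope_opp; auto.
Qed.
Lemma LogSlope_N a : LogSlope a -> forall n, LogSlope (INR n * a).
Proof. intros Ha n. rewrite INR_IZR_INZ. apply LogSlope_Z; auto. Qed.
Lemma LogSlope_of nu : Slope nu -> LogSlope (ln nu).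
Proof. intros H. unfold LogSlope. rewrite exp_ln; auto. apply Slope_pos; auto. Qed.

Lemma end_contracting bp : alpha < bp -> x bp = bp -> (forall t, alpha < t < bp -> t < x t) ->
  exists lam' e', lam' < 1 /\ Lam lam' /\ 0 < e' /\ e' <= bp - alpha /\
    forall s, bp - e' < s <= bp -> x s = bp + lam' * (s - bp).
Proof.
  intros Hbp Hx_end Hlt. destruct (felt_left x Hxx bp) as [e [m [c [He [Hm H]]]]].
  rewrite H in Hx_end by lra.
  set (e' := Rmin e (bp - alpha)).
  assert (He1 : e' <= e) by apply Rmin_l. assert (He2 : e' <= bp - alpha) by apply Rmin_r.
  assert (He3 : 0 < e') by (apply Rmin_glb_lt; lra). clearbody e'.
  assert (Hf : forall s, bp - e' < s <= bp -> x s = bp + m * (s - bp)).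
  { intros s Hs. rewrite H by lra. lra. }
  exists m, e'. split; [|repeat split; auto].
  set (s := bp - e' / 2). assert (Hs := Hlt s ltac:(unfold s; lra)).
  rewrite Hf in Hs by (unfold s; lra). unfold s in Hs. nra.
Qed.
Lemma iterF_cent y n t : comm y -> iterF n x (y t) = y (iterF n x t).
Proof. intros Cy. induction n; simpl; auto. unfold rcomp. rewrite IHn, Cy. auto. Qed.

Section Expanding.
Variables (lam ex : R).
Hypothesis Hlam_gt1 : 1 < lam.
Hypothesis Hlam_in : Lam lam.
Hypothesis Hex : 0 < ex.
Hypothesis Hx_start : forall s, alpha <= s < alpha + ex -> x s = alpha + lam * (s - alpha).

(* The start zone lies inside I, since x fixes beta. *)
Lemma x_beta : x beta = beta.
Proof. apply (felt_out x Hxx). unfold inI; lra. Qed.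
Lemma start_zone_le : alpha + ex <= beta.
Proof.
  destruct (Rle_dec (alpha + ex) beta) as [|H]; auto. exfalso.
  assert (Hab := hab).
  assert (E : x beta = alpha + lam * (beta - alpha)) by (apply Hx_start; lra).
  rewrite x_beta in E. nra.
Qed.
(* It is the supremum S of the w such that x moves (alpha, w] upwards; by
   continuity x S < S and x S > S are both impossible. *)
Lemma first_fixed_point : exists bp, alpha + ex <= bp <= beta /\ x bp = bp /\
  forall t, alpha < t < bp -> t < x t.
Proof.
  assert (Hab := hab). assert (Hx := Hxx). assert (Hexl := start_zone_le).
  set (E := fun w => alpha <= w <= beta /\ forall t, alpha < t <= w -> t < x t).
  assert (Hb : bound E) by (exists beta; intros w [Hw _]; lra).
  assert (He : exists w, E w) by (exists alpha; split; [lra|intros; lra]).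
  destruct (completeness E Hb He) as [S [HS1 HS2]].
  assert (H1 : forall t, alpha < t < S -> t < x t).
  { intros t Ht. apply NNPP. intro Hn. assert (S <= t); [|lra].
    apply HS2. intros w [_ Hw]. destruct (Rle_dec w t) as [|Hwt]; auto.
    exfalso; apply Hn, Hw; lra. }
  assert (Hz : forall w, alpha <= w < alpha + ex -> E w).
  { intros w Hw. split; [lra|]. intros t Ht. rewrite Hx_start by lra. nra. }
  assert (HSex : alpha + ex <= S).
  { destruct (Rle_dec (alpha + ex) S) as [|Hn]; auto. exfalso.
    assert (HSa : alpha <= S) by (apply HS1; apply Hz; lra).
    assert (S >= (S + alpha + ex) / 2) by (apply Rle_ge, HS1, Hz; lra). lra. }
  assert (HSb : S <= beta) by (apply HS2; intros w [Hw _]; lra).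
  exists S. split; [lra|]. split; [|auto].
  destruct (Req_dec S beta) as [->|HSb']; [apply x_beta|].
  destruct (Rtotal_order (x S) S) as [Hlt|[Heq|Hgt]]; auto; exfalso.
  - destruct (Felt_moves_down_near x S Hx Hlt) as [d [Hd Hnear]].
    set (s := Rmax alpha (S - d / 2)).
    assert (Hs : alpha <= s /\ S - d / 2 <= s) by (split; [apply Rmax_l|apply Rmax_r]).
    assert (s < S) by (unfold s; apply Rmax_lub_lt; lra).
    assert (x s < s) by (apply Hnear, Rabs_lt_iff; lra).
    destruct (Req_dec s alpha) as [Hsa|Hsa].
    + rewrite Hsa, (felt_out x Hx alpha) in *; [lra|unfold inI; lra].
    + assert (s < x s) by (apply H1; lra). lra.
  - destruct (Felt_moves_up_near x S Hx Hgt) as [d [Hd Hnear]].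
    set (w := S + Rmin d (beta - S) / 2).
    assert (Hw : 0 < Rmin d (beta - S)) by (apply Rmin_glb_lt; lra).
    pose proof (Rmin_l d (beta - S)). pose proof (Rmin_r d (beta - S)).
    assert (Ew : E w).
    { split; [unfold w; lra|]. intros t Ht.
      destruct (Rlt_dec t S); [apply H1; lra|apply Hnear, Rabs_lt_iff; unfold w in Ht; lra]. }
    specialize (HS1 w Ew). unfold w in HS1. lra.
Qed.

(* On the start zone, x^j is multiplication by lam^j around alpha, and an
   element of C(x) with slope mu is multiplication by mu on the whole start
   zone (conjugate its germ by a power of x). *)
Lemma start_zone_iter j p : alpha <= p -> alpha + lam ^ j * (p - alpha) < alpha + ex ->
  iterF j x p = alpha + lam ^ j * (p - alpha).
Proof.
  intros Hp. induction j; intros Hj.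
  - simpl. ring.
  - simpl. unfold rcomp. assert (Hl : lam ^ j <= lam * lam ^ j).
    { assert (0 < lam ^ j) by (apply pow_lt; lra). nra. }
    assert (0 <= lam ^ j * (p - alpha)) by (apply Rmult_le_pos; [left; apply pow_lt|]; lra).
    simpl in Hj. rewrite IHj by nra. rewrite Hx_start. ring.
    split; [lra|]. nra.
Qed.
Lemma start_zone_cent y mu : Cent y -> germ_slope y mu -> 0 < mu ->
  forall s, alpha <= s < alpha + ex -> alpha + mu * (s - alpha) < alpha + ex -> y s = alpha + mu * (s - alpha).
Proof.
  intros [Hy Cy] [ey [Hey Hsl]] Hmu s Hs Hms.
  destruct (pow_big lam Hlam_gt1 ((s - alpha) / ey)) as [j Hj].
  assert (Hlj : 0 < lam ^ j) by (apply pow_lt; lra).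
  set (p := alpha + (s - alpha) / lam ^ j).
  assert (Hp0 : 0 <= (s - alpha) / lam ^ j) by (unfold Rdiv; apply Rmult_le_pos; [lra|left; apply Rinv_0_lt_compat; auto]).
  assert (Hp1 : (s - alpha) / lam ^ j < ey).
  { apply (Rmult_lt_reg_l (lam ^ j)); auto. unfold Rdiv. rewrite <- Rmult_assoc, (Rmult_comm (lam ^ j)), Rmult_assoc, Rinv_r by lra.
    apply (Rmult_lt_compat_r ey) in Hj; auto. unfold Rdiv in Hj. rewrite Rmult_assoc, Rinv_l in Hj by lra. lra. }
  assert (Hps : lam ^ j * (p - alpha) = s - alpha) by (unfold p; field; lra).
  assert (Es : iterF j x p = s) by (rewrite start_zone_iter; unfold p in *; [lra|lra|lra]).
  rewrite <- Es at 1. rewrite <- (iterF_cent y j p Cy).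
  rewrite Hsl by (unfold p; lra).
  rewrite start_zone_iter.
  - rewrite <- Hps. ring.
  - assert (0 <= mu * (p - alpha)) by (apply Rmult_le_pos; unfold p; lra). lra.
  - replace (lam ^ j * (alpha + mu * (p - alpha) - alpha)) with (mu * (lam ^ j * (p - alpha))) by ring.
    rewrite Hps. lra.
Qed.
Lemma start_zone_cent_aff_near y mu u : Cent y -> germ_slope y mu -> Lam mu -> alpha < u < alpha + ex ->
  alpha + mu * (u - alpha) < alpha + ex -> aff_near y u.
Proof.
  intros Cy Hsl Hmu Hu Hmu2. pose proof (Lpos _ Hmu).
  set (U := Rmin (u - alpha) (Rmin (alpha + ex - u) ((alpha + ex - (alpha + mu * (u - alpha))) / mu))).
  assert (HU1 : U <= u - alpha) by apply Rmin_l.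
  assert (HU2 : U <= alpha + ex - u) by (eapply Rle_trans; [apply Rmin_r|apply Rmin_l]).
  assert (HU3 : U <= (alpha + ex - (alpha + mu * (u - alpha))) / mu) by (eapply Rle_trans; [apply Rmin_r|apply Rmin_r]).
  assert (HU : 0 < U) by (unfold U; repeat apply Rmin_glb_lt; try lra; apply Rdiv_lt_0_compat; lra).
  clearbody U.
  exists U, mu, (alpha - mu * alpha). split; auto. split; auto.
  intros s Hs. rewrite (start_zone_cent y mu Cy Hsl H s); [ring|lra|].
  assert (mu * U <= alpha + ex - (alpha + mu * (u - alpha))).
  { assert (Heq : mu * ((alpha + ex - (alpha + mu * (u - alpha))) / mu) = alpha + ex - (alpha + mu * (u - alpha))) by (field; lra).
    apply (Rmult_le_compat_l mu) in HU3; lra. }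
  nra.
Qed.

Lemma Slope_lam : Slope lam.
Proof. exists x. split; [apply Cent_x|]. exists ex. split; auto. Qed.
(* A base point q such that the fundamental domain [q, x q] and its image
   under x lie in the start zone. *)
Definition q := alpha + ex / (lam * lam + 1).
Lemma q_facts : alpha < q /\ lam * lam * (q - alpha) < ex.
Proof.
  unfold q. assert (H : 0 < lam * lam + 1) by nra.
  split. assert (0 < ex / (lam * lam + 1)) by (apply Rdiv_lt_0_compat; lra). lra.
  replace (alpha + ex / (lam * lam + 1) - alpha) with (ex / (lam * lam + 1)) by ring.
  assert (E : lam * lam * (ex / (lam * lam + 1)) = ex - ex / (lam * lam + 1)) by (field; lra).
  rewrite E. assert (0 < ex / (lam * lam + 1)) by (apply Rdiv_lt_0_compat; lra). lra.
Qed.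
Lemma xq : x q = alpha + lam * (q - alpha).
Proof. destruct q_facts. assert (1 < lam * lam) by nra. apply Hx_start. split; [lra|]. nra. Qed.

Section FixedEnd.
Variables (bp lam' e' : R).
Hypothesis Hbp_range : alpha + ex <= bp <= beta.
Hypothesis Hbp_fixed : x bp = bp.
Hypothesis Hbp_up : forall t, alpha < t < bp -> t < x t.
Hypothesis Hlam'_lt1 : lam' < 1.
Hypothesis Hlam'_in : Lam lam'.
Hypothesis He' : 0 < e'.
Hypothesis Hx_end : forall s, bp - e' < s <= bp -> x s = bp + lam' * (s - bp).

Definition near_end d s := bp - d < s < bp.
Lemma x_maps_gap t : alpha < t < bp -> t < x t < bp.
Proof.
  intros Ht. split; [apply Hbp_up; auto|]. rewrite <- Hbp_fixed. apply (Felt_mono x Hxx). lra.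
Qed.
Lemma iterF_in_gap n t : alpha < t < bp -> alpha < iterF n x t < bp.
Proof.
  intros Ht. induction n; simpl; auto. unfold rcomp. pose proof (x_maps_gap _ IHn). lra.
Qed.
Lemma iterF_incr n t : alpha < t < bp -> iterF n x t < iterF (S n) x t.
Proof. intros Ht. simpl. unfold rcomp. apply x_maps_gap. apply iterF_in_gap; auto. Qed.
Lemma iterF_mono_n n m t : alpha < t < bp -> (n <= m)%nat -> iterF n x t <= iterF m x t.
Proof.
  intros Ht Hnm. induction Hnm; [lra|]. pose proof (iterF_incr m t Ht). lra.
Qed.
Lemma orbit_enters d : 0 < d -> forall q, alpha < q < bp -> exists N, forall n, (N <= n)%nat -> near_end d (iterF n x q).
Proof.
  intros Hd q Hq.
  assert (HN : exists N, bp - d < iterF N x q).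
  { destruct (classic (exists N, bp - d < iterF N x q)) as [|Hn]; auto. exfalso.
    set (E := fun w => exists n, w = iterF n x q).
    assert (Hb : bound E).
    { exists (bp - d). intros w [n ->]. destruct (Rle_dec (iterF n x q) (bp - d)) as [|H]; auto.
      exfalso; apply Hn; exists n; lra. }
    destruct (completeness E Hb (ex_intro _ q (ex_intro _ O eq_refl))) as [L [HL1 HL2]].
    assert (HLq : q <= L) by (apply HL1; exists O; auto).
    assert (HLb : L <= bp - d) by (apply HL2; intros w [n ->]; destruct (Rle_dec (iterF n x q) (bp - d)) as [|H]; auto;
       exfalso; apply Hn; exists n; lra).
    assert (HxL : L < x L) by (apply Hbp_up; lra).
    assert (Heps : 0 < x L - L) by lra.
    destruct (Felt_cont x Hxx L _ Heps) as [dd [Hdd Hc]].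
    destruct (classic (exists n, L - dd < iterF n x q)) as [[n Hn2]|Hn2].
    - assert (Hle : iterF n x q <= L) by (apply HL1; exists n; auto).
      specialize (Hc (iterF n x q) ltac:(apply Rabs_lt_iff; lra)). apply Rabs_lt_iff in Hc.
      assert (iterF (S n) x q <= L) by (apply HL1; exists (S n); auto).
      simpl in H. unfold rcomp in H. lra.
    - assert (L <= L - dd). { apply HL2. intros w [n ->]. destruct (Rle_dec (iterF n x q) (L - dd)) as [|H]; auto.
        exfalso; apply Hn2; exists n; lra. } lra. }
  destruct HN as [N HN]. exists N. intros n Hn. split.
  - pose proof (iterF_mono_n N n q Hq Hn). lra.
  - apply iterF_in_gap; auto.
Qed.

Local Notation Zone := (near_end e').

Lemma Zone_iter k s : Zone s -> Zone (iterF k x s) /\ iterF k x s = bp + lam' ^ k * (s - bp).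
Proof.
  intros Hs. pose proof (Lpos _ Hlam'_in). unfold near_end in *. induction k.
  - simpl. split; [auto|ring].
  - destruct IHk as [Hk Ek]. simpl. unfold rcomp. rewrite Hx_end by lra. rewrite Ek. split.
    + assert (0 < lam' ^ k) by (apply pow_lt; auto). nra.
    + ring.
Qed.
Lemma Zone_iter_aff_near k s : Zone s -> aff_near (iterF k x) s.
Proof.
  intros Hs. unfold near_end in Hs. exists (Rmin (s - (bp - e')) (bp - s)), (lam' ^ k), (bp - lam' ^ k * bp).
  assert (H1 := Rmin_l (s - (bp - e')) (bp - s)). assert (H2 := Rmin_r (s - (bp - e')) (bp - s)).
  split; [apply Rmin_glb_lt; lra|]. split; [apply Lam_pow; auto|].
  intros w Hw. rewrite (proj2 (Zone_iter k w ltac:(unfold near_end; lra))). ring.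
Qed.
(* u is essential when x^n has a breakpoint at u for some (equivalently,
   every) n sending u into the end zone. *)
Definition Ess u := exists n, Zone (iterF n x u) /\ ~ aff_near (iterF n x) u.
Lemma Ess_stable n k u : Zone (iterF n x u) -> (aff_near (iterF n x) u <-> aff_near (iterF (k + n) x) u).
Proof.
  intros HZ. split; intros H.
  - apply (aff_near_ext (fun t => iterF k x (iterF n x t))). intros; rewrite iterF_add; auto.
    apply aff_near_comp; auto. apply Zone_iter_aff_near; auto.
  - apply (aff_near_cancel_outer (iterF n x) (iterF k x) u). apply Zone_iter_aff_near; auto.
    apply Felt_cont, iterF_Felt, Hxx.
    apply (aff_near_ext (iterF (k + n) x)); auto. intros; rewrite iterF_add; auto.
Qed.
Lemma Ess_at u m : Ess u -> Zone (iterF m x u) -> ~ aff_near (iterF m x) u.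
Proof.
  intros [n [Hn Hns]] Hm. destruct (Nat.le_gt_cases n m) as [Hle|Hgt].
  - replace m with ((m - n) + n)%nat by lia. rewrite <- Ess_stable; auto.
  - replace n with ((n - m) + m)%nat in Hns by lia. rewrite <- Ess_stable in Hns; auto.
Qed.
Lemma Ess_intro u m : Zone (iterF m x u) -> ~ aff_near (iterF m x) u -> Ess u.
Proof. intros; exists m; auto. Qed.
Lemma x_aff_near_start u : alpha < u < alpha + ex -> aff_near x u.
Proof.
  intros Hu. exists (Rmin (u - alpha) (alpha + ex - u)), lam, (alpha - lam * alpha).
  assert (H1 := Rmin_l (u - alpha) (alpha + ex - u)). assert (H2 := Rmin_r (u - alpha) (alpha + ex - u)).
  split; [apply Rmin_glb_lt; lra|]. split; auto. intros s Hs. rewrite Hx_start by lra. ring.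
Qed.
Lemma Ess_x u : alpha < u < alpha + ex -> (Ess u <-> Ess (x u)).
Proof.
  intros Hu. assert (Hub : alpha < u < bp) by lra.
  pose proof (x_aff_near_start u Hu) as Hsx.
  split.
  - intros HE. destruct (orbit_enters e' He' u Hub) as [N HN].
    apply (Ess_intro (x u) N).
    + rewrite iterF_comm. apply (HN (S N)). lia.
    + intros Hs. apply (Ess_at u (S N) HE (HN (S N) ltac:(lia))).
      apply (aff_near_ext (fun t => iterF N x (x t))). intros; rewrite iterF_comm; auto.
      apply aff_near_comp; auto.
  - intros [n [Hn Hns]]. apply (Ess_intro u (S n)).
    + rewrite iterF_comm in Hn. auto.
    + intros Hs. apply Hns. apply aff_near_cancel_inner; auto.
      apply (aff_near_ext (iterF (S n) x)); auto. intros; rewrite iterF_comm; auto.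
Qed.
Lemma Ess_y y u : Cent y -> alpha < u < bp -> alpha < y u < bp -> aff_near y u -> (Ess u <-> Ess (y u)).
Proof.
  intros [Hy Cy] Hu Hyu Hsy.
  destruct (felt_left y Hy bp) as [ey [my [cy [Hey [Hmy Hly]]]]].
  set (d := Rmin e' ey). assert (Hd1 : d <= e') by apply Rmin_l. assert (Hd2 : d <= ey) by apply Rmin_r.
  assert (Hd : 0 < d) by (apply Rmin_glb_lt; auto). clearbody d.
  destruct (orbit_enters d Hd u Hu) as [N1 HN1].
  destruct (orbit_enters e' He' (y u) Hyu) as [N2 HN2].
  set (m := (N1 + N2)%nat).
  assert (Z1 := HN1 m ltac:(unfold m; lia)). assert (Z2 := HN2 m ltac:(unfold m; lia)).
  unfold near_end in Z1, Z2.
  assert (Hyz : aff_near y (iterF m x u)).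
  { exists (Rmin (iterF m x u - (bp - ey)) (bp - iterF m x u)), my, cy.
    assert (H1 := Rmin_l (iterF m x u - (bp - ey)) (bp - iterF m x u)).
    assert (H2 := Rmin_r (iterF m x u - (bp - ey)) (bp - iterF m x u)).
    split; [apply Rmin_glb_lt; lra|]. split; auto. intros s Hs. apply Hly. lra. }
  assert (Key : aff_near (iterF m x) (y u) <-> aff_near (iterF m x) u).
  { split; intros H.
    - apply (aff_near_cancel_outer (iterF m x) y u); auto. apply Felt_cont, iterF_Felt, Hxx.
      apply (aff_near_ext (fun t => iterF m x (y t))). intros; apply iterF_cent; auto.
      apply aff_near_comp; auto.
    - apply aff_near_cancel_inner; auto. apply (aff_near_ext (fun t => y (iterF m x t))). intros; rewrite iterF_cent; auto.
      apply aff_near_comp; auto. }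
  assert (Zu : Zone (iterF m x u)) by (unfold near_end; lra).
  assert (Zyu : Zone (iterF m x (y u))) by (unfold near_end; lra).
  split; intros HE.
  - apply (Ess_intro (y u) m Zyu). rewrite Key. apply Ess_at; auto.
  - apply (Ess_intro u m Zu). rewrite <- Key. apply Ess_at; auto.
Qed.

Lemma domain_in_zone : exists N, forall u, q <= u <= x q -> Zone (iterF N x u).
Proof.
  destruct q_facts as [Hq1 Hq2].
  assert (1 < lam * lam) by nra.
  assert (Hqb : alpha < q < bp) by nra.
  destruct (orbit_enters e' He' q Hqb) as [N HN].
  exists N. intros u Hu. pose proof (HN N (le_n _)) as H1. pose proof (HN (S N) (le_S _ _ (le_n _))) as H2.
  unfold near_end in *.
  assert (HQ := iterF_Felt N x Hxx).
  assert (Ha1 : iterF N x q <= iterF N x u) by (apply (Felt_le _ HQ); lra).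
  assert (Ha2 : iterF N x u <= iterF N x (x q)) by (apply (Felt_le _ HQ); lra).
  rewrite iterF_comm in Ha2. simpl in H2. unfold rcomp in H2. lra.
Qed.
(* x^N cannot be affine on a neighbourhood [q, x q + d) of a fundamental
   domain that it maps into the end zone: writing x^N (x s) = x (x^N s), the
   left side has slope m * lam near q and the right side slope lam' * m. *)
Lemma domain_not_affine N m c d : (forall u, q <= u <= x q -> Zone (iterF N x u)) -> 0 < m -> 0 < d ->
  ~ (forall s, q <= s < x q + d -> iterF N x s = m * s + c).
Proof.
  intros HN Hm Hd Haff. destruct q_facts as [Hq1 Hq2].
  assert (Hll : 1 < lam * lam) by nra. assert (Hxq := xq).
  set (d' := Rmin (d / lam) (x q - q) / 2).
  assert (Hd1 : Rmin (d / lam) (x q - q) <= d / lam) by apply Rmin_l.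
  assert (Hd2 : Rmin (d / lam) (x q - q) <= x q - q) by apply Rmin_r.
  assert (Hd3 : 0 < Rmin (d / lam) (x q - q)) by (apply Rmin_glb_lt; [apply Rdiv_lt_0_compat|]; nra).
  assert (Hd4 : lam * (d / lam) = d) by (field; lra).
  assert (Hd' : 0 < d') by (unfold d'; lra).
  assert (Hlamd : lam * d' < d) by (unfold d'; nra).
  assert (Hdq : d' < x q - q) by (unfold d'; lra).
  clearbody d'.
  assert (Key : forall s, q <= s <= q + d' ->
      m * (alpha + lam * (s - alpha)) + c = bp + lam' * (m * s + c - bp)).
  { intros s Hs.
    assert (Hxs : x s = alpha + lam * (s - alpha)) by (apply Hx_start; nra).
    rewrite <- Hxs, <- Haff by (rewrite Hxs, Hxq; nra). rewrite iterF_comm.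
    assert (HZ := HN s ltac:(lra)). unfold near_end in HZ.
    rewrite Hx_end by lra. rewrite Haff by lra. reflexivity. }
  pose proof (Key q ltac:(lra)) as K1. pose proof (Key (q + d') ltac:(lra)) as K2.
  assert (Hz : (lam - lam') * m * d' = 0) by nra.
  assert (0 < (lam - lam') * m * d') by (apply Rmult_lt_0_compat; [apply Rmult_lt_0_compat|]; lra).
  lra.
Qed.

(* Hence some point of [q, x q) is essential: otherwise x^N would be affine
   near every point of [q, x q] (essentiality of x q is that of q), so
   affine on a neighbourhood of [q, x q]. *)
Lemma ess_in_domain : exists u0, q <= u0 < x q /\ Ess u0.
Proof.
  destruct domain_in_zone as [N HN]. destruct q_facts as [Hq1 Hq2].
  assert (Hll : 1 < lam * lam) by nra. assert (Hxq := xq).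
  assert (Hqz : alpha < q < alpha + ex) by nra.
  assert (Hqxq : q < x q) by (rewrite Hxq; nra).
  apply NNPP. intro Hno.
  set (Phi := iterF N x).
  assert (Hsm : forall u, q <= u <= x q -> aff_near Phi u).
  { intros u Hu. apply NNPP. intro Hns.
    assert (HE : Ess u) by (apply (Ess_intro u N); auto).
    destruct (Req_dec u (x q)) as [Heq|Hne].
    - rewrite Heq, <- (Ess_x q Hqz) in HE. apply Hno. exists q. split; auto. lra.
    - apply Hno. exists u. split; auto. lra. }
  destruct (Hsm q ltac:(lra)) as [e1 [m [c [He1 [Hm H1]]]]].
  assert (Haff : forall s, q <= s < x q -> Phi s = m * s + c).
  { apply (aff_propagate Phi q (x q) m c e1 Hm); [lra|auto| |].
    - intros s Hs; apply H1; lra.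
    - intros t Ht; apply Hsm; lra. }
  destruct (agree_past_aff_near Phi (fun s => m * s + c) q (x q)) as [d [Hd Hext]];
    [apply Hsm; lra|exists 1, m, c; repeat split; auto; lra|lra|exact Haff|].
  apply (domain_not_affine N m c d HN (Lpos _ Hm) Hd).
  intros s Hs. destruct (Rlt_dec s (x q)); [apply Haff|apply Hext]; lra.
Qed.
Lemma ess_slope_image u0 nu : q <= u0 < x q -> Ess u0 -> Slope nu ->
  q <= alpha + nu * (u0 - alpha) < x q -> Ess (alpha + nu * (u0 - alpha)).
Proof.
  intros Hu0 HE0 [h [Ch Hh]] Hv. destruct q_facts as [Hq1 Hq2].
  assert (Hll : 1 < lam * lam) by nra. assert (Hxq := xq).
  assert (Hxqe : x q < alpha + ex) by (rewrite Hxq; nra).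
  destruct (Felt_germ_slope h (proj1 Ch)) as [mh [Hmh Hh']].
  rewrite <- (germ_slope_uniq h nu mh Hh Hh') in Hmh. pose proof (Lpos _ Hmh).
  assert (Hhu : h u0 = alpha + nu * (u0 - alpha)) by (apply (start_zone_cent h nu Ch Hh); lra).
  assert (Hsh : aff_near h u0) by (apply (start_zone_cent_aff_near h nu u0); auto; lra).
  rewrite <- Hhu, <- (Ess_y h u0 Ch); auto; [lra|rewrite Hhu; lra].
Qed.

Lemma reduce_into_domain u0 a : q <= u0 < x q ->
  exists w : Z, q <= alpha + exp (a - IZR w * ln lam) * (u0 - alpha) < x q.
Proof.
  intros Hu0. destruct q_facts as [Hq1 Hq2]. assert (Hxq := xq).
  set (l := ln lam). assert (Hl : 0 < l) by (unfold l; rewrite <- ln_1; apply ln_increasing; lra).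
  assert (Hexpl : exp l = lam) by (unfold l; apply exp_ln; lra).
  set (c := ln ((u0 - alpha) / (q - alpha))).
  assert (Hrat : 0 < (u0 - alpha) / (q - alpha)) by (apply Rdiv_lt_0_compat; lra).
  destruct (Z_floor ((c + a) / l)) as [w Hw]. exists w.
  set (E := a - IZR w * l).
  assert (HE1 : 0 <= E + c < l).
  { assert (Hz : c + a = l * ((c + a) / l)) by (field; lra). unfold E. split; nra. }
  assert (Hv : exp E * (u0 - alpha) = (q - alpha) * exp (E + c))
    by (unfold c; rewrite exp_plus, exp_ln by auto; field; lra).
  assert (Hexp1 : 1 <= exp (E + c) < lam).
  { rewrite <- exp_0, <- Hexpl. split.
    - destruct (Req_dec 0 (E + c)) as [<-|Hne]; [lra|left; apply exp_increasing; lra].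
    - apply exp_increasing; lra. }
  fold E. rewrite Hv, Hxq. split; nra.
Qed.

(* Step 3: the essential points of [q, x q] are breakpoints of one power x^N,
   finitely many; by pigeonhole, for each nu in Slope two of the points
   alpha + nu^k lam^(-w) (u0 - alpha), k <= |B|, coincide. *)
Lemma slope_root_bounded : exists n0, forall nu, Slope nu ->
  exists k w, (1 <= k <= n0)%nat /\ INR k * ln nu = IZR w * ln lam.
Proof.
  destruct domain_in_zone as [N HN].
  destruct (felt_breaks (iterF N x) (iterF_Felt N x Hxx)) as [B HB].
  destruct ess_in_domain as [u0 [Hu0 HE0]].
  assert (Hfin : forall v, q <= v < x q -> Ess v -> In v B).
  { intros v Hv HE. apply NNPP. intro Hn.
    apply (Ess_at v N HE (HN v ltac:(lra))). apply HB; auto. }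
  exists (length B). intros nu Hnu. pose proof (Slope_pos nu Hnu) as Hnup.
  set (P := fun k v => exists w : Z, v = alpha + exp (INR k * ln nu - IZR w * ln lam) * (u0 - alpha)).
  assert (HP : forall k, (k <= length B)%nat -> exists v, In v B /\ P k v).
  { intros k Hk. destruct (reduce_into_domain u0 (INR k * ln nu) Hu0) as [w Hw].
    exists (alpha + exp (INR k * ln nu - IZR w * ln lam) * (u0 - alpha)).
    split; [|exists w; reflexivity]. apply Hfin; auto. apply ess_slope_image; auto.
    replace (INR k * ln nu - IZR w * ln lam) with (INR k * ln nu + IZR (- w) * ln lam)
      by (rewrite opp_IZR; ring).
    apply LogSlope_add; [apply LogSlope_N, LogSlope_of; auto|apply LogSlope_Z, LogSlope_of, Slope_lam]. }
  destruct (pigeonhole B P HP) as [i [j [v [Hij [[wi Hi] [wj Hj]]]]]].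
  exists (j - i)%nat, (wj - wi)%Z. split; [lia|].
  rewrite Hi in Hj. destruct q_facts as [Hq1 _].
  assert (Heq : exp (INR i * ln nu - IZR wi * ln lam) = exp (INR j * ln nu - IZR wj * ln lam))
    by (apply (Rmult_eq_reg_r (u0 - alpha)); lra).
  apply exp_inv in Heq. rewrite minus_INR by lia. rewrite minus_IZR. lra.
Qed.

(* Taking M = n0!, every nu in Slope satisfies nu^M in lam^Z. *)
Lemma slope_root_uniform : exists M, (0 < M)%nat /\ forall nu, Slope nu -> exists w, INR M * ln nu = IZR w * ln lam.
Proof.
  destruct slope_root_bounded as [n0 Hn0]. exists (fact n0). split; [apply lt_O_fact|].
  intros nu Hnu. destruct (Hn0 nu Hnu) as [k [w [Hk E]]].
  destruct (fact_multiple n0 k Hk) as [t Ht]. exists (Z.of_nat t * w)%Z.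
  rewrite Ht, mult_INR, mult_IZR, <- INR_IZR_INZ.
  replace (INR k * INR t * ln nu) with (INR t * (INR k * ln nu)) by ring. rewrite E. ring.
Qed.

(* Conclusion for an expanding germ: {w | lam^w = nu^M for some nu in Slope}
   is a subgroup of Z containing M, generated by some k > 0, and an
   element g realising the generator has every element of C(x) as a power. *)
Lemma cent_cyclic_at : exists g, Cent g /\ forall y, Cent y -> exists a, zpowP g y a.
Proof.
  destruct slope_root_uniform as [M [HM HMr]].
  assert (Hl : 0 < ln lam) by (rewrite <- ln_1; apply ln_increasing; lra).
  assert (HMp : 0 < INR M) by (apply lt_0_INR; lia).
  set (E := fun w => exists nu, Slope nu /\ INR M * ln nu = IZR w * ln lam).
  destruct (Z_subgroup_cyclic E M HM) as [k [Hk [[nu0 [[g [Cg Hg]] Hnu0]] Hgen]]].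
  - exists lam. split; [apply Slope_lam|]. rewrite <- INR_IZR_INZ. reflexivity.
  - intros a b [n1 [S1 H1]] [n2 [S2 H2]]. exists (n1 * / n2).
    pose proof (Slope_pos _ S1). pose proof (Slope_pos _ S2).
    split; [apply Slope_mul; auto; apply Slope_inv; auto|].
    rewrite ln_mult, ln_Rinv, minus_IZR by (auto; apply Rinv_0_lt_compat; auto). nra.
  - exists g. split; auto. intros y Cy.
    destruct (Felt_germ_slope y (proj1 Cy)) as [nu [_ Hy]].
    assert (Snu : Slope nu) by (exists y; auto).
    assert (Snu0 : Slope nu0) by (exists g; auto).
    destruct (HMr nu Snu) as [w Hw]. destruct (Hgen w (ex_intro _ nu (conj Snu Hw))) as [a Hwa].
    exists a. apply (cent_pow_of_slope g y nu0 nu a Cg Hg Cy Hy); [apply Slope_pos; auto..|].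
    apply (Rmult_eq_reg_l (INR M)); [|lra].
    rewrite Hw, Hwa, mult_IZR, Rmult_assoc, <- Hnu0. ring.
Qed.

End FixedEnd.

End Expanding.

Lemma cent_cyclic_expanding lam : 1 < lam -> Lam lam -> germ_slope x lam ->
  exists g, Cent g /\ forall y, Cent y -> exists a, zpowP g y a.
Proof.
  intros H1 HL [ex [Hex Hx_start]].
  destruct (first_fixed_point lam ex H1 Hex Hx_start) as [bp [Hbp_range [Hbp_fixed Hbp_up]]].
  assert (Hab := hab).
  assert (Hbpa : alpha < bp) by lra.
  destruct (end_contracting bp Hbpa Hbp_fixed Hbp_up) as [lam' [e' [Hl1 [HlL [He [Heb Hx_end]]]]]].
  apply (cent_cyclic_at lam ex) with (bp := bp) (lam' := lam') (e' := e'); auto.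
Qed.

End Centralizer.

Section Main.
Context {St : Setting}.
Local Notation A := sA.
Local Notation alpha := salpha.
Local Notation beta := sbeta.

Lemma comm_inv_iff x y : Felt x -> Felt y ->
  ((forall t, y (x t) = x (y t)) <-> (forall t, y (inv x t) = inv x (y t))).
Proof.
  intros Hx Hy. split; intros H t.
  - apply (Felt_inj x Hx). rewrite <- H, !inv_r; auto.
  - apply (Felt_inj (inv x) (Felt_inv x Hx)). rewrite <- H, !inv_l; auto.
Qed.

(* A map moving every point of I ∩ A does not have slope 1 at alpha, since
   A is dense near alpha. *)
Lemma slope_ne_1 x lam : (forall t, inI t -> A t -> x t <> t) -> germ_slope x lam -> lam <> 1.
Proof.
  intros Hfix [e [He H]] ->. assert (Hab := hab).
  assert (Hm : alpha < Rmin (alpha + e) beta) by (apply Rmin_glb_lt; lra).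
  destruct (density alpha (Rmin (alpha + e) beta) Hm) as [t [HAt Ht]].
  pose proof (Rmin_l (alpha + e) beta). pose proof (Rmin_r (alpha + e) beta).
  apply (Hfix t); [unfold inI; lra|exact HAt|]. rewrite H by lra. ring.
Qed.

(* Lemma 4.2 for the local description: C(x) is cyclic.  If x has slope
   lam < 1 at alpha, apply the expanding case to x^-1, which has the same
   centraliser. *)
Theorem centralizer_cyclic x : Felt x -> (forall t, inI t -> A t -> x t <> t) ->
  exists g, Felt g /\ (forall t, g (x t) = x (g t)) /\
    forall y, Felt y -> (forall t, y (x t) = x (y t)) -> exists a, zpowP g y a.
Proof.
  intros Hx Hfix. destruct (Felt_germ_slope x Hx) as [lam [Hlam Hsl]]. pose proof (Lpos _ Hlam).
  pose proof (slope_ne_1 x lam Hfix Hsl) as Hne.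
  destruct (Rlt_dec 1 lam) as [Hgt|Hle].
  - destruct (@cent_cyclic_expanding St (@Build_Moving St x Hx Hfix) lam) as [g [[Hg Cg] Hall]]; auto.
    exists g. split; [|split]; auto. intros y Hy Cy. apply Hall. split; auto.
  - assert (Hfix' : forall t, inI t -> A t -> inv x t <> t).
    { intros t Ht HA E. apply (Hfix t Ht HA). rewrite <- E at 1. apply inv_r; auto. }
    destruct (@cent_cyclic_expanding St (@Build_Moving St (inv x) (Felt_inv x Hx) Hfix') (/ lam))
      as [g [[Hg Cg] Hall]].
    + rewrite <- Rinv_1. apply Rinv_lt_contravar; lra.
    + apply Linv; auto.
    + apply germ_slope_inv; auto.
    + exists g. split; [auto|split].
      * exact (proj2 (comm_inv_iff x g Hx Hg) Cg).
      * intros y Hy Cy. apply Hall. split; auto. exact (proj1 (comm_inv_iff x y Hx Hy) Cy).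
Qed.

End Main.

Theorem lemma4p2 (r : R) (Lam A : R -> Prop)
  (hr : 0 < r) (hLam : good_Lam Lam) (hA : good_A r Lam A)
  (alpha beta : R)
  (halpha : 0 <= alpha <= r) (hAalpha : A alpha)
  (hbeta : 0 <= beta <= r) (hAbeta : A beta) (hab : alpha < beta)
  (x : R -> R)
  (hx : inF_S r Lam A (fun t => alpha < t < beta) x)
  (hfix : forall t, alpha < t < beta -> A t -> x t <> t) :
  exists g : R -> R,
    inF_S r Lam A (fun t => alpha < t < beta) g /\ rcomp x g = rcomp g x /\
    forall y : R -> R,
      inF_S r Lam A (fun t => alpha < t < beta) y -> rcomp x y = rcomp y x ->
      exists n : Z, is_Zpow g n y.
Proof.
  destruct hLam as [Lpos' [L1' [Lmul' [Linv' Lne']]]].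
  destruct hA as [A0' [Aadd' [Aopp' [Ar' Amul']]]].
  pose (St := Build_Setting r Lam A alpha beta hr Lpos' L1' Lmul' Linv' Lne'
                A0' Aadd' Aopp' Ar' Amul' halpha hbeta hAalpha hAbeta hab).
  destruct (@centralizer_cyclic St x (@inF_Felt St x hx) hfix) as [g [Hg [Cg Hall]]].
  exists g. split; [exact (@Felt_inF St g Hg)|split].
  - apply functional_extensionality. exact Cg.
  - intros y Hy Hcy.
    destruct (Hall y (@inF_Felt St y Hy) (equal_f Hcy)) as [n Hn].
    exists n. apply zpowP_is_Zpow; auto.
Qed.
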